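(* Let $\mathbb D\subset\mathbb C$ be a contractible open subset containing $0$. Let $\nu=\nu(z,w)$ and $s=s(z,w)$ be holomorphic functions on $\mathbb D\times\mathbb D$ satisfying $\nu_{zz}+\tfrac s2\nu=0$, with $\nu(0,0)=0$ and $\nu\not\equiv0$. Then the limit of $\mu=-\frac{2\nu_z}{\nu}$ as $(z,w)\to(0,0)$ exists, i.e. it is either a finite number or $\infty$. *)

From Stdlib Require Import Reals.
From Coquelicot Require Export Coquelicot.
Open Scope R_scope.

Definition contractible (D : C -> Prop) : Prop :=
  (exists z, D z) /\
  exists (H : R * C -> C) (c : C),
    (forall t z, 0 <= t <= 1 -> D z -> D (H (t, z))) /\
    (forall z, D z -> H (0, z) = z) /\
    (forall z, D z -> H (1, z) = c) /\
    (forall t z, 0 <= t <= 1 -> D z ->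
       filterlim H
         (within (fun q : R * C => 0 <= fst q <= 1 /\ D (snd q)) (locally (t, z)))
         (locally (H (t, z)))).

(* f : C^2 -> C is holomorphic on the open set U x V: complex (Frechet)
   differentiable, with a C-linear differential, at every point. *)
Definition holomorphic2 (U V : C -> Prop) (f : C * C -> C) : Prop :=
  forall p : C * C, U (fst p) -> V (snd p) ->
    ex_filterdiff (K := C_AbsRing)
      (U := prod_NormedModule C_AbsRing C_NormedModule C_NormedModule)
      (V := C_NormedModule) f (locally p).

Definition is_partial_z (f : C * C -> C) (p : C * C) (l : C) : Prop :=
  is_derive (K := C_AbsRing) (V := C_NormedModule)
    (fun z => f (z, snd p)) (fst p) l.

From Stdlib Require Import Reals Lra Lia Wf_nat FunctionalExtensionality Classical IndefiniteDescription.
From Coquelicot Require Import Coquelicot.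
Open Scope R_scope.

(* For fixed [w], [nu (., w)] solves the linear equation [f'' = - (s / 2) f], so near [z = 0]
   [nu (z, w) = a w + z b w + O(|z|^2 (|a w| + |z| |b w|))] and
   [nuz (z, w) = b w + O(|z| (|a w| + |z| |b w|))], with [a = nu (0, .)] and [b = nuz (0, .)].
   Hence [mu] tends to [-2 L] if [b / a] tends to [L] at [0], and to infinity if [a = o(b)]:
   everything reduces to a dichotomy for the ratio [b / a] at [0].
   For holomorphic [a] and [b] that dichotomy follows by comparing orders of vanishing,
   which come from Goursat's theorem and Cauchy's formula on a square. The function [b] is not
   known to be holomorphic, but [h b] is approximated by the holomorphic functions
   [nu (h, .) - nu (0, .)] up to [O(h^2 (|a| + h |b|))], and the dichotomy survives the limit
   [h -> 0]. *)

Lemma Im_le_Cmod (z : C) : Rabs (Im z) <= Cmod z.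
Proof.
  destruct z as [x y]; unfold Cmod, Im; simpl.
  rewrite <- sqrt_Rsqr_abs. apply sqrt_le_1_alt. unfold Rsqr. nra.
Qed.

Lemma Cmod_le_Re_Im (z : C) : Cmod z <= Rabs (Re z) + Rabs (Im z).
Proof.
  pose proof (Rabs_pos (Re z)); pose proof (Rabs_pos (Im z)).
  apply Rsqr_incr_0_var; [|lra]. unfold Rsqr.
  replace (Cmod z * Cmod z) with (Cmod z ^ 2) by ring. rewrite Cmod2_alt.
  rewrite <- (pow2_abs (Re z)), <- (pow2_abs (Im z)). nra.
Qed.

Lemma Cmod_triangle3 (a b c : C) : Cmod (a + b + c) <= Cmod a + Cmod b + Cmod c.
Proof. eapply Rle_trans; [apply Cmod_triangle|]. pose proof (Cmod_triangle a b). lra. Qed.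

Lemma Cmod_le_sub_plus (a b : C) : Cmod a <= Cmod (a - b) + Cmod b.
Proof. replace a with (a - b + b)%C at 1 by ring. apply Cmod_triangle. Qed.

Lemma Cmod_sub_le (x y z : C) : Cmod (x - z) <= Cmod (x - y) + Cmod (y - z).
Proof. replace (x - z)%C with ((x - y) + (y - z))%C by ring. apply Cmod_triangle. Qed.

Lemma Cmod_sub_sym (a b : C) : Cmod (a - b) = Cmod (b - a).
Proof. replace (a - b)%C with (- (b - a))%C by ring. apply Cmod_opp. Qed.

Lemma Cmod_2 : Cmod 2 = 2.
Proof. rewrite Cmod_R, Rabs_pos_eq; lra. Qed.

Lemma Cminus_0_r (z : C) : (z - 0)%C = z.
Proof. ring. Qed.

Lemma Cminus_eq_0 (a b : C) : (a - b)%C = RtoC 0 -> a = b.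
Proof. intros E. replace a with ((a - b) + b)%C by ring. rewrite E. ring. Qed.

(** * Complex differentiability *)

Definition Ccontinuous (f : C -> C) (z : C) : Prop :=
  forall eps, 0 < eps -> exists del, 0 < del /\
    forall y, Cmod (y - z) < del -> Cmod (f y - f z) < eps.

Definition is_Cderive (f : C -> C) (z l : C) : Prop :=
  forall eps, 0 < eps -> exists del, 0 < del /\
    forall y, Cmod (y - z) < del -> Cmod (f y - f z - l * (y - z)) <= eps * Cmod (y - z).

Definition ex_Cderive (f : C -> C) (z : C) : Prop := exists l, is_Cderive f z l.

Lemma Ccontinuous_scal (c : C) f z : Ccontinuous f z -> Ccontinuous (fun y => c * f y)%C z.
Proof.
  intros H eps He. destruct (H (eps / (Cmod c + 1))) as [d [Hd Hy]].
  { apply Rdiv_lt_0_compat; auto. pose proof (Cmod_ge_0 c); lra. }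
  exists d; split; auto. intros y Hy'. specialize (Hy y Hy').
  replace (c * f y - c * f z)%C with (c * (f y - f z))%C by ring. rewrite Cmod_mult.
  pose proof (Cmod_ge_0 c). pose proof (Cmod_ge_0 (f y - f z)).
  apply Rle_lt_trans with ((Cmod c + 1) * Cmod (f y - f z)). nra.
  apply Rlt_le_trans with ((Cmod c + 1) * (eps / (Cmod c + 1))).
  apply Rmult_lt_compat_l; lra. right; field; lra.
Qed.

Lemma Ccontinuous_minus f g z :
  Ccontinuous f z -> Ccontinuous g z -> Ccontinuous (fun y => f y - g y)%C z.
Proof.
  intros Hf Hg eps He.
  destruct (Hf (eps/2)) as [d1 [Hd1 H1]]; [lra|].
  destruct (Hg (eps/2)) as [d2 [Hd2 H2]]; [lra|].
  exists (Rmin d1 d2); split; [apply Rmin_pos; auto|]. intros y Hy.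
  specialize (H1 y (Rlt_le_trans _ _ _ Hy (Rmin_l _ _))).
  specialize (H2 y (Rlt_le_trans _ _ _ Hy (Rmin_r _ _))).
  replace (f y - g y - (f z - g z))%C with ((f y - f z) + - (g y - g z))%C by ring.
  eapply Rle_lt_trans; [apply Cmod_triangle|]. rewrite Cmod_opp. lra.
Qed.

Lemma is_Cderive_continuous f z l : is_Cderive f z l -> Ccontinuous f z.
Proof.
  intros H eps Heps.
  destruct (H 1 Rlt_0_1) as [d [Hd Hy]].
  set (m := Rmin d (eps / (Cmod l + 2))).
  assert (Hm : 0 < m).
  { unfold m. apply Rmin_pos; auto. apply Rdiv_lt_0_compat; auto. pose proof (Cmod_ge_0 l); lra. }
  exists m; split; auto. intros y Hy'.
  assert (Hye : Cmod (y - z) < eps / (Cmod l + 2)) by (eapply Rlt_le_trans; [exact Hy'|apply Rmin_r]).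
  specialize (Hy y (Rlt_le_trans _ _ _ Hy' (Rmin_l _ _))).
  replace (f y - f z)%C with ((f y - f z - l * (y - z)) + l * (y - z))%C by ring.
  eapply Rle_lt_trans; [apply Cmod_triangle|]. rewrite Cmod_mult.
  pose proof (Cmod_ge_0 l). pose proof (Cmod_ge_0 (y - z)).
  assert (Cmod (y - z) * (Cmod l + 2) < eps).
  { apply Rmult_lt_reg_r with (/ (Cmod l + 2)). apply Rinv_0_lt_compat; lra.
    rewrite Rmult_assoc, Rinv_r by lra. rewrite Rmult_1_r. exact Hye. }
  nra.
Qed.

Lemma ex_Cderive_continuous f z : ex_Cderive f z -> Ccontinuous f z.
Proof. intros [l H]. eapply is_Cderive_continuous; eauto. Qed.

Lemma is_Cderive_local f g z l del : 0 < del ->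
  (forall y, Cmod (y - z) < del -> f y = g y) -> is_Cderive f z l -> is_Cderive g z l.
Proof.
  intros Hd E H eps He. destruct (H eps He) as [d [Hd' Hy]].
  exists (Rmin d del). split; [apply Rmin_pos; auto|]. intros y Hy'.
  assert (E1 : f y = g y) by (apply E; eapply Rlt_le_trans; [exact Hy'|apply Rmin_r]).
  assert (E2 : f z = g z) by (apply E; replace (z - z)%C with (RtoC 0) by ring; rewrite Cmod_0; auto).
  rewrite <- E1, <- E2. apply Hy. eapply Rlt_le_trans; [exact Hy'|apply Rmin_l].
Qed.

Lemma is_Cderive_ext f g z l : (forall y, f y = g y) -> is_Cderive f z l -> is_Cderive g z l.
Proof. intros E. apply (is_Cderive_local f g z l 1); auto; lra. Qed.

Lemma is_Cderive_quadratic (a b c p z : C) :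
  is_Cderive (fun y => a + b * (y - p) + c * (y - p) * (y - p))%C z (b + 2 * c * (z - p))%C.
Proof.
  intros eps He. exists (eps / (Cmod c + 1)). split.
  { apply Rdiv_lt_0_compat; [lra|]. pose proof (Cmod_ge_0 c); lra. }
  intros y Hy.
  replace (a + b * (y - p) + c * (y - p) * (y - p) - (a + b * (z - p) + c * (z - p) * (z - p)) -
     (b + 2 * c * (z - p)) * (y - z))%C with (c * (y - z) * (y - z))%C by ring.
  rewrite !Cmod_mult. pose proof (Cmod_ge_0 c). pose proof (Cmod_ge_0 (y - z)).
  apply Rmult_le_compat_r; auto.
  apply Rle_trans with ((Cmod c + 1) * (eps / (Cmod c + 1))); [|right; field; lra].
  apply Rmult_le_compat; lra.
Qed.

Lemma is_Cderive_const (c z : C) : is_Cderive (fun _ => c) z 0.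
Proof.
  pose proof (is_Cderive_quadratic c 0 0 z z) as H.
  replace (0 + 2 * 0 * (z - z))%C with (RtoC 0) in H by ring.
  eapply is_Cderive_ext; [|exact H]. intros; simpl; ring.
Qed.

Lemma is_Cderive_id (z : C) : is_Cderive (fun y => y) z 1.
Proof.
  pose proof (is_Cderive_quadratic z 1 0 z z) as H.
  replace (1 + 2 * 0 * (z - z))%C with (RtoC 1) in H by ring.
  eapply is_Cderive_ext; [|exact H]. intros; simpl; ring.
Qed.

Lemma is_Cderive_plus f g z lf lg :
  is_Cderive f z lf -> is_Cderive g z lg -> is_Cderive (fun y => f y + g y)%C z (lf + lg).
Proof.
  intros Hf Hg eps He.
  destruct (Hf (eps/2)) as [d1 [Hd1 H1]]; [lra|].
  destruct (Hg (eps/2)) as [d2 [Hd2 H2]]; [lra|].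
  exists (Rmin d1 d2); split; [apply Rmin_pos; auto|]. intros y Hy.
  specialize (H1 y (Rlt_le_trans _ _ _ Hy (Rmin_l _ _))).
  specialize (H2 y (Rlt_le_trans _ _ _ Hy (Rmin_r _ _))).
  replace (f y + g y - (f z + g z) - (lf + lg) * (y - z))%C with
    ((f y - f z - lf * (y - z)) + (g y - g z - lg * (y - z)))%C by ring.
  eapply Rle_trans; [apply Cmod_triangle|]. lra.
Qed.

Lemma is_Cderive_mult f g z lf lg : is_Cderive f z lf -> is_Cderive g z lg ->
  is_Cderive (fun y => f y * g y)%C z (lf * g z + f z * lg).
Proof.
  intros Hf Hg eps He.
  pose proof (Cmod_ge_0 (g z)) as Pg. pose proof (Cmod_ge_0 (f z)) as Pf.
  pose proof (Cmod_ge_0 lf) as Pl.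
  destruct (Hf (eps / (3 * (Cmod (g z) + 1)))) as [d1 [Hd1 H1]]; [apply Rdiv_lt_0_compat; lra|].
  destruct (Hg (eps / (3 * (Cmod (f z) + 1)))) as [d2 [Hd2 H2]]; [apply Rdiv_lt_0_compat; lra|].
  destruct (is_Cderive_continuous _ _ _ Hg (Rmin 1 (eps / (3 * (Cmod lf + 1))))) as [d3 [Hd3 H3]].
  { apply Rmin_pos; [lra|]. apply Rdiv_lt_0_compat; lra. }
  exists (Rmin d1 (Rmin d2 d3)); split; [repeat apply Rmin_pos; auto|]. intros y Hy.
  pose proof (Rmin_l d1 (Rmin d2 d3)); pose proof (Rmin_r d1 (Rmin d2 d3));
  pose proof (Rmin_l d2 d3); pose proof (Rmin_r d2 d3).
  specialize (H1 y ltac:(lra)). specialize (H2 y ltac:(lra)). specialize (H3 y ltac:(lra)).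
  pose proof (Rmin_l 1 (eps / (3 * (Cmod lf + 1)))); pose proof (Rmin_r 1 (eps / (3 * (Cmod lf + 1)))).
  replace (f y * g y - f z * g z - (lf * g z + f z * lg) * (y - z))%C with
    ((f y - f z - lf * (y - z)) * g y + f z * (g y - g z - lg * (y - z))
     + lf * (y - z) * (g y - g z))%C by ring.
  eapply Rle_trans; [apply Cmod_triangle3|]. rewrite !Cmod_mult.
  pose proof (Cmod_ge_0 (y - z)) as Pu. set (u := Cmod (y - z)) in *.
  assert (Hgy : Cmod (g y) <= Cmod (g z) + 1) by (pose proof (Cmod_le_sub_plus (g y) (g z)); lra).
  assert (A1 : Cmod (f y - f z - lf * (y - z)) * Cmod (g y) <= eps / 3 * u).
  { apply Rle_trans with (eps / (3 * (Cmod (g z) + 1)) * u * (Cmod (g z) + 1)).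
    apply Rmult_le_compat; auto using Cmod_ge_0. right. field. lra. }
  assert (A2 : Cmod (f z) * Cmod (g y - g z - lg * (y - z)) <= eps / 3 * u).
  { apply Rle_trans with ((Cmod (f z) + 1) * (eps / (3 * (Cmod (f z) + 1)) * u)).
    apply Rmult_le_compat; auto using Cmod_ge_0; lra. right. field. lra. }
  assert (A3 : Cmod lf * u * Cmod (g y - g z) <= eps / 3 * u).
  { apply Rle_trans with ((Cmod lf + 1) * u * (eps / (3 * (Cmod lf + 1)))).
    apply Rmult_le_compat; auto using Cmod_ge_0. nra. apply Rmult_le_compat_r; lra. lra.
    right. field. lra. }
  lra.
Qed.

Lemma is_Cderive_scal (c : C) f z l : is_Cderive f z l -> is_Cderive (fun y => c * f y)%C z (c * l).
Proof.
  intros H. replace (c * l)%C with (0 * f z + c * l)%C by ring.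
  apply is_Cderive_mult; auto. apply is_Cderive_const.
Qed.

Lemma Ccontinuous_bounded_below g z : Ccontinuous g z -> g z <> RtoC 0 ->
  exists d, 0 < d /\ forall y, Cmod (y - z) < d -> Cmod (g z) / 2 <= Cmod (g y).
Proof.
  intros Hc Hz. assert (Hm : 0 < Cmod (g z)) by (apply Cmod_gt_0; auto).
  destruct (Hc (Cmod (g z) / 2)) as [d [Hd Hy]]; [lra|]. exists d. split; auto.
  intros y Hyz. specialize (Hy y Hyz). pose proof (Cmod_le_sub_plus (g z) (g y)) as H.
  rewrite Cmod_sub_sym in H. lra.
Qed.

Lemma is_Cderive_inv g z lg : is_Cderive g z lg -> g z <> RtoC 0 ->
  is_Cderive (fun y => / g y)%C z (- lg / (g z * g z)).
Proof.
  intros Hg Hz eps He.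
  assert (Hm : 0 < Cmod (g z)) by (apply Cmod_gt_0; auto). set (m := Cmod (g z)) in *.
  pose proof (Cmod_ge_0 lg) as Pl.
  set (e1 := eps * (m * m) / 4). set (e2 := eps * (m * m * m) / (4 * (Cmod lg + 1))).
  assert (He1 : 0 < e1) by (unfold e1; apply Rdiv_lt_0_compat; [apply Rmult_lt_0_compat|]; nra).
  assert (He2 : 0 < e2) by (unfold e2; apply Rdiv_lt_0_compat; [repeat apply Rmult_lt_0_compat|]; lra).
  pose proof (is_Cderive_continuous _ _ _ Hg) as Hc.
  destruct (Hg e1 He1) as [d1 [Hd1 H1]]. destruct (Hc e2 He2) as [d2 [Hd2 H2]].
  destruct (Ccontinuous_bounded_below g z Hc Hz) as [d3 [Hd3 H3]].
  exists (Rmin d1 (Rmin d2 d3)). split; [repeat apply Rmin_pos; auto|]. intros y Hy.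
  assert (Hy' : Cmod (y - z) < d1 /\ Cmod (y - z) < d2 /\ Cmod (y - z) < d3)
    by (revert Hy; unfold Rmin; repeat destruct Rle_dec; lra).
  specialize (H1 y ltac:(lra)). specialize (H2 y ltac:(lra)). specialize (H3 y ltac:(lra)). fold m in H3.
  assert (Hgy0 : g y <> 0%C) by (intro E; rewrite E, Cmod_0 in H3; lra).
  replace (/ g y - / g z - - lg / (g z * g z) * (y - z))%C with
    (- (g y - g z - lg * (y - z)) * / (g y * g z)
     + lg * (y - z) * (g y - g z) * / (g y * (g z * g z)))%C by (field; auto).
  eapply Rle_trans; [apply Cmod_triangle|].
  rewrite !Cmod_mult, Cmod_opp, !Cmod_inv, !Cmod_mult by (repeat apply Cmult_neq_0; auto). fold m.
  pose proof (Cmod_ge_0 (y - z)) as Pu. set (u := Cmod (y - z)) in *.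
  assert (Hinv1 : / (Cmod (g y) * m) <= 2 / (m * m))
    by (replace (2 / (m * m)) with (/ (m / 2 * m)) by (field; lra); apply Rinv_le_contravar; nra).
  assert (Hinv2 : / (Cmod (g y) * (m * m)) <= 2 / (m * m * m)).
  { replace (2 / (m * m * m)) with (/ (m / 2 * (m * m))) by (field; lra).
    apply Rinv_le_contravar; [apply Rmult_lt_0_compat; nra|]. apply Rmult_le_compat_r; nra. }
  assert (A1 : Cmod (g y - g z - lg * (y - z)) * / (Cmod (g y) * m) <= eps / 2 * u).
  { apply Rle_trans with (e1 * u * (2 / (m * m))); [apply Rmult_le_compat; auto using Cmod_ge_0|].
    - left; apply Rinv_0_lt_compat; nra.
    - right. unfold e1. field. lra. }
  assert (A2 : Cmod lg * u * Cmod (g y - g z) * / (Cmod (g y) * (m * m)) <= eps / 2 * u).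
  { apply Rle_trans with ((Cmod lg + 1) * u * e2 * (2 / (m * m * m))).
    - apply Rmult_le_compat; [repeat apply Rmult_le_pos; auto using Cmod_ge_0 |
        left; apply Rinv_0_lt_compat, Rmult_lt_0_compat; nra | | auto].
      apply Rmult_le_compat; [nra | apply Cmod_ge_0 | nra | lra].
    - right. unfold e2. field. lra. }
  lra.
Qed.

Lemma ex_Cderive_const (c z : C) : ex_Cderive (fun _ => c) z.
Proof. eexists; apply is_Cderive_const. Qed.

Lemma ex_Cderive_id (z : C) : ex_Cderive (fun y => y) z.
Proof. eexists; apply is_Cderive_id. Qed.

Lemma ex_Cderive_ext f g z : (forall y, f y = g y) -> ex_Cderive f z -> ex_Cderive g z.
Proof. intros E [l H]. exists l. eapply is_Cderive_ext; eauto. Qed.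

Lemma ex_Cderive_plus f g z :
  ex_Cderive f z -> ex_Cderive g z -> ex_Cderive (fun y => f y + g y)%C z.
Proof. intros [a A] [b B]. eexists; apply is_Cderive_plus; eauto. Qed.

Lemma ex_Cderive_mult f g z :
  ex_Cderive f z -> ex_Cderive g z -> ex_Cderive (fun y => f y * g y)%C z.
Proof. intros [a A] [b B]. eexists; apply is_Cderive_mult; eauto. Qed.

Lemma ex_Cderive_minus f g z :
  ex_Cderive f z -> ex_Cderive g z -> ex_Cderive (fun y => f y - g y)%C z.
Proof.
  intros A B. apply (ex_Cderive_ext (fun y => f y + (- (1)) * g y)%C); [intros; ring|].
  apply ex_Cderive_plus, ex_Cderive_mult; auto. apply ex_Cderive_const.
Qed.

Lemma ex_Cderive_pow (N : nat) (z : C) : ex_Cderive (fun y => y ^ N)%C z.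
Proof.
  induction N; [apply (ex_Cderive_const 1)|].
  apply (ex_Cderive_mult (fun y => y)); auto. apply ex_Cderive_id.
Qed.

Lemma ex_Cderive_div f g z : ex_Cderive f z -> ex_Cderive g z -> g z <> RtoC 0 ->
  ex_Cderive (fun y => f y / g y)%C z.
Proof.
  intros Hf [l Hg] Hz. apply ex_Cderive_mult; auto. eexists; apply is_Cderive_inv; eauto.
Qed.

(** * Paths in the plane *)

Definition path_continuous (g : R -> C) (t : R) : Prop :=
  forall eps, 0 < eps -> exists del, 0 < del /\
    forall s, Rabs (s - t) < del -> Cmod (g s - g t) < eps.

Definition is_path_derive (g : R -> C) (t : R) (l : C) : Prop :=
  is_derive (fun s => Re (g s)) t (Re l) /\ is_derive (fun s => Im (g s)) t (Im l).

Lemma path_continuous_Re g t : path_continuous g t -> continuous (fun s => Re (g s)) t.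
Proof.
  intros H. apply filterlim_locally. intros eps.
  destruct (H eps (cond_pos eps)) as [d [Hd Hy]].
  exists (mkposreal d Hd). intros s Hs. change (Rabs (Re (g s) - Re (g t)) < eps).
  eapply Rle_lt_trans; [|exact (Hy s Hs)].
  replace (Re (g s) - Re (g t)) with (Re (g s - g t)%C) by (unfold Re; simpl; ring).
  apply re_le_Cmod.
Qed.

Lemma path_continuous_Im g t : path_continuous g t -> continuous (fun s => Im (g s)) t.
Proof.
  intros H. apply filterlim_locally. intros eps.
  destruct (H eps (cond_pos eps)) as [d [Hd Hy]].
  exists (mkposreal d Hd). intros s Hs. change (Rabs (Im (g s) - Im (g t)) < eps).
  eapply Rle_lt_trans; [|exact (Hy s Hs)].
  replace (Im (g s) - Im (g t)) with (Im (g s - g t)%C) by (unfold Im; simpl; ring).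
  apply Im_le_Cmod.
Qed.

Lemma path_continuous_Cmod g t : path_continuous g t -> continuity_pt (fun s => Cmod (g s)) t.
Proof.
  intros H eps He. destruct (H eps He) as [d [Hd Hy]]. exists d; split; auto.
  intros x [_ Hx]. simpl in *. unfold R_dist in *. specialize (Hy x Hx).
  pose proof (Cmod_le_sub_plus (g x) (g t)). pose proof (Cmod_le_sub_plus (g t) (g x)).
  rewrite Cmod_sub_sym in H1. apply Rabs_lt_between. lra.
Qed.

Lemma Cmod_line_step (p d : C) (s t : R) :
  Cmod ((p + RtoC s * d) - (p + RtoC t * d))%C = Rabs (s - t) * Cmod d.
Proof.
  replace ((p + RtoC s * d) - (p + RtoC t * d))%C with (RtoC (s - t) * d)%C.
  - rewrite Cmod_mult, Cmod_R; auto.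
  - unfold RtoC; apply injective_projections; simpl; ring.
Qed.

Lemma Ccontinuous_line (f : C -> C) (p d : C) (t : R) :
  Ccontinuous f (p + RtoC t * d)%C -> path_continuous (fun s => f (p + RtoC s * d)%C) t.
Proof.
  intros H eps He. destruct (H eps He) as [del [Hd Hy]]. pose proof (Cmod_ge_0 d).
  exists (del / (Cmod d + 1)). split; [apply Rdiv_lt_0_compat; lra|].
  intros s Hs. apply Hy. rewrite Cmod_line_step. pose proof (Rabs_pos (s - t)).
  apply Rle_lt_trans with (Rabs (s - t) * (Cmod d + 1)); [nra|].
  apply Rmult_lt_reg_r with (/ (Cmod d + 1)); [apply Rinv_0_lt_compat; lra|].
  rewrite Rmult_assoc, Rinv_r by lra. rewrite Rmult_1_r. exact Hs.
Qed.

Lemma is_Cderive_line_Re (f : C -> C) (p d : C) (t : R) (l : C) :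
  is_Cderive f (p + RtoC t * d)%C l ->
  is_derive (fun s : R => Re (f (p + RtoC s * d)%C)) t (Re (d * l)).
Proof.
  intros H. apply is_derive_Reals. intros eps Heps. pose proof (Cmod_ge_0 d).
  set (e := eps / (2 * (Cmod d + 1))).
  assert (He : 0 < e) by (unfold e; apply Rdiv_lt_0_compat; lra).
  destruct (H e He) as [del [Hdel Hy]].
  assert (Hdd : 0 < del / (Cmod d + 1)) by (apply Rdiv_lt_0_compat; lra).
  exists (mkposreal _ Hdd). intros h Hh0 Hh. simpl in Hh.
  pose proof (Cmod_line_step p d (t + h) t) as Hyz. replace (t + h - t) with h in Hyz by ring.
  assert (Hlt : Cmod ((p + RtoC (t + h) * d) - (p + RtoC t * d))%C < del).
  { rewrite Hyz. pose proof (Rabs_pos h).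
    apply Rle_lt_trans with (Rabs h * (Cmod d + 1)); [nra|].
    apply Rmult_lt_reg_r with (/ (Cmod d + 1)); [apply Rinv_0_lt_compat; lra|].
    rewrite Rmult_assoc, Rinv_r by lra. rewrite Rmult_1_r. exact Hh. }
  specialize (Hy _ Hlt). rewrite Hyz in Hy.
  set (u := (f (p + RtoC (t + h) * d) - f (p + RtoC t * d)
             - l * ((p + RtoC (t + h) * d) - (p + RtoC t * d)))%C) in *.
  assert (Hre : Re (f (p + RtoC (t + h) * d)%C) - Re (f (p + RtoC t * d)%C) = Re u + h * Re (d * l)).
  { unfold u. unfold Re at 3 4. simpl. unfold Re. simpl. ring. }
  rewrite Hre.
  replace ((Re u + h * Re (d * l)) / h - Re (d * l)) with (Re u / h) by (field; auto).
  unfold Rdiv. rewrite Rabs_mult, Rabs_inv.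
  pose proof (re_le_Cmod u).
  assert (Hhp : 0 < Rabs h) by (apply Rabs_pos_lt; auto).
  apply Rle_lt_trans with (e * Cmod d).
  { apply Rmult_le_reg_r with (Rabs h); auto. rewrite Rmult_assoc, Rinv_l by lra. nra. }
  apply Rle_lt_trans with (eps / 2); [|lra].
  unfold e. apply Rle_trans with (eps / 2 * (Cmod d / (Cmod d + 1))); [right; field; lra|].
  rewrite <- (Rmult_1_r (eps / 2)) at 2. apply Rmult_le_compat_l; [lra|].
  apply Rmult_le_reg_r with (Cmod d + 1); [lra|]. unfold Rdiv.
  rewrite Rmult_assoc, Rinv_l by lra. lra.
Qed.

Lemma is_Cderive_line (f : C -> C) (p d : C) (t : R) (l : C) :
  is_Cderive f (p + RtoC t * d)%C l ->
  is_path_derive (fun s : R => f (p + RtoC s * d)%C) t (d * l).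
Proof.
  intros H. split; [apply is_Cderive_line_Re; auto|].
  (* [(0, -1)] is [-i], and [Im u = Re (-i u)]. *)
  pose proof (is_Cderive_line_Re _ p d t _ (is_Cderive_scal (0, -1)%R _ _ _ H)) as H'.
  replace (Im (d * l)) with (Re (d * ((0, -1)%R * l)))%C by (unfold Re, Im, Cmult; simpl; ring).
  eapply is_derive_ext; [|exact H']. intros s. unfold Re, Im, Cmult; simpl. ring.
Qed.

Lemma horizontal_line (x y : R) : ((0, y) + RtoC x * 1)%C = (x, y).
Proof. unfold RtoC, Cmult, Cplus; apply injective_projections; simpl; ring. Qed.

Lemma vertical_line (x y : R) : ((x, 0) + RtoC y * Ci)%C = (x, y).
Proof. unfold RtoC, Ci, Cmult, Cplus; apply injective_projections; simpl; ring. Qed.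

Lemma Ccontinuous_horizontal f x y : Ccontinuous f (x, y) -> path_continuous (fun s => f (s, y)) x.
Proof.
  intros H. rewrite <- horizontal_line in H. pose proof (Ccontinuous_line f _ _ _ H) as A.
  intros eps He. destruct (A eps He) as [d [Hd Hy]]. exists d; split; auto.
  intros s Hs. specialize (Hy s Hs). rewrite !horizontal_line in Hy. auto.
Qed.

Lemma Ccontinuous_vertical f x y : Ccontinuous f (x, y) -> path_continuous (fun s => f (x, s)) y.
Proof.
  intros H. rewrite <- vertical_line in H. pose proof (Ccontinuous_line f _ _ _ H) as A.
  intros eps He. destruct (A eps He) as [d [Hd Hy]]. exists d; split; auto.
  intros s Hs. specialize (Hy s Hs). rewrite !vertical_line in Hy. auto.
Qed.

Lemma is_Cderive_horizontal f x y l :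
  is_Cderive f (x, y) l -> is_path_derive (fun s => f (s, y)) x l.
Proof.
  intros H. rewrite <- horizontal_line in H.
  destruct (is_Cderive_line f _ _ _ _ H) as [A B]. rewrite Cmult_1_l in A, B.
  split; (eapply is_derive_ext; [|eassumption]); intros s; simpl; rewrite horizontal_line; auto.
Qed.

Lemma is_Cderive_vertical f x y l :
  is_Cderive f (x, y) l -> is_path_derive (fun s => f (x, s)) y (Ci * l).
Proof.
  intros H. rewrite <- vertical_line in H.
  destruct (is_Cderive_line f _ _ _ _ H) as [A B].
  split; (eapply is_derive_ext; [|eassumption]); intros s; simpl; rewrite vertical_line; auto.
Qed.

Lemma path_mean_value (g dg : R -> C) a b M : a <= b ->
  (forall t, a <= t <= b -> is_path_derive g t (dg t)) ->
  (forall t, a <= t <= b -> Cmod (dg t) <= M) ->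
  Cmod (g b - g a) <= 2 * M * (b - a).
Proof.
  intros Hab HD HM.
  assert (MVT : forall (h dh : R -> R), (forall t, a <= t <= b -> is_derive h t (dh t)) ->
            (forall t, a <= t <= b -> Rabs (dh t) <= M) -> Rabs (h b - h a) <= M * (b - a)).
  { intros h dh Hh Hdh. destruct (MVT_gen h a b dh) as [c [Hc E]].
    - intros x Hx. rewrite Rmin_left, Rmax_right in Hx by auto. apply Hh; lra.
    - intros x Hx. rewrite Rmin_left, Rmax_right in Hx by auto. apply continuity_pt_filterlim.
      apply (ex_derive_continuous (K:=R_AbsRing) (V:=R_NormedModule)). eexists; apply Hh; auto.
    - rewrite Rmin_left, Rmax_right in Hc by auto. rewrite E, Rabs_mult, (Rabs_pos_eq (b - a)) by lra.
      apply Rmult_le_compat_r; [lra|]. apply Hdh; auto. }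
  eapply Rle_trans; [apply Cmod_le_Re_Im|].
  replace (Re (g b - g a)%C) with (Re (g b) - Re (g a)) by (unfold Re; simpl; ring).
  replace (Im (g b - g a)%C) with (Im (g b) - Im (g a)) by (unfold Im; simpl; ring).
  assert (Rabs (Re (g b) - Re (g a)) <= M * (b - a)).
  { apply (MVT (fun s => Re (g s)) (fun s => Re (dg s))); [apply HD|].
    intros; eapply Rle_trans; [apply re_le_Cmod|apply HM; auto]. }
  assert (Rabs (Im (g b) - Im (g a)) <= M * (b - a)).
  { apply (MVT (fun s => Im (g s)) (fun s => Im (dg s))); [apply HD|].
    intros; eapply Rle_trans; [apply Im_le_Cmod|apply HM; auto]. }
  lra.
Qed.

(** * Integrals along segments and rectangles *)

Definition CRInt (g : R -> C) (a b : R) : C :=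
  (RInt (fun t => Re (g t)) a b, RInt (fun t => Im (g t)) a b).

Definition path_continuous_on (g : R -> C) (a b : R) : Prop :=
  forall t, a <= t <= b -> path_continuous g t.

Lemma ex_RInt_Re g a b : a <= b -> path_continuous_on g a b -> ex_RInt (fun t => Re (g t)) a b.
Proof.
  intros Hab H. apply (ex_RInt_continuous (V:=R_CompleteNormedModule)).
  intros z Hz. rewrite Rmin_left, Rmax_right in Hz by auto. apply path_continuous_Re, H, Hz.
Qed.

Lemma ex_RInt_Im g a b : a <= b -> path_continuous_on g a b -> ex_RInt (fun t => Im (g t)) a b.
Proof.
  intros Hab H. apply (ex_RInt_continuous (V:=R_CompleteNormedModule)).
  intros z Hz. rewrite Rmin_left, Rmax_right in Hz by auto. apply path_continuous_Im, H, Hz.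
Qed.

Lemma CRInt_ext g h a b : a <= b -> (forall t, a <= t <= b -> g t = h t) ->
  CRInt g a b = CRInt h a b.
Proof.
  intros Hab H. unfold CRInt.
  f_equal; apply RInt_ext; intros x Hx; rewrite Rmin_left, Rmax_right in Hx by auto;
    rewrite H; auto; lra.
Qed.

Lemma CRInt_plus g h a b : a <= b -> path_continuous_on g a b -> path_continuous_on h a b ->
  CRInt (fun t => g t + h t)%C a b = (CRInt g a b + CRInt h a b)%C.
Proof.
  intros Hab Hg Hh. unfold CRInt, Cplus. apply injective_projections; cbn [fst snd].
  - rewrite <- (RInt_plus (V:=R_CompleteNormedModule)) by (apply ex_RInt_Re; auto). reflexivity.
  - rewrite <- (RInt_plus (V:=R_CompleteNormedModule)) by (apply ex_RInt_Im; auto). reflexivity.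
Qed.

Lemma CRInt_scal g a b (c : C) : a <= b -> path_continuous_on g a b ->
  CRInt (fun t => c * g t)%C a b = (c * CRInt g a b)%C.
Proof.
  intros Hab Hg. unfold CRInt. destruct c as [c1 c2].
  pose proof (ex_RInt_Re _ _ _ Hab Hg) as Hre. pose proof (ex_RInt_Im _ _ _ Hab Hg) as Him.
  pose proof (ex_RInt_scal (V:=R_CompleteNormedModule) _ _ _ c1 Hre).
  pose proof (ex_RInt_scal (V:=R_CompleteNormedModule) _ _ _ c2 Hre).
  pose proof (ex_RInt_scal (V:=R_CompleteNormedModule) _ _ _ c1 Him).
  pose proof (ex_RInt_scal (V:=R_CompleteNormedModule) _ _ _ c2 Him).
  unfold Cmult. apply injective_projections; cbn [fst snd].
  - transitivity (RInt (fun t => c1 * Re (g t) - c2 * Im (g t)) a b).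
    { apply RInt_ext. intros. unfold Re, Im; simpl. ring. }
    rewrite (RInt_minus (V:=R_CompleteNormedModule)); auto.
    rewrite !(RInt_scal (V:=R_CompleteNormedModule)); auto.
  - transitivity (RInt (fun t => c1 * Im (g t) + c2 * Re (g t)) a b).
    { apply RInt_ext. intros. unfold Re, Im; simpl. ring. }
    rewrite (RInt_plus (V:=R_CompleteNormedModule)); auto.
    rewrite !(RInt_scal (V:=R_CompleteNormedModule)); auto.
Qed.

Lemma CRInt_Chasles g a b c : a <= b -> b <= c ->
  path_continuous_on g a b -> path_continuous_on g b c ->
  (CRInt g a b + CRInt g b c)%C = CRInt g a c.
Proof.
  intros Hab Hbc H1 H2. unfold CRInt, Cplus. apply injective_projections; cbn [fst snd].
  - apply (RInt_Chasles (V:=R_CompleteNormedModule)); apply ex_RInt_Re; auto.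
  - apply (RInt_Chasles (V:=R_CompleteNormedModule)); apply ex_RInt_Im; auto.
Qed.

Lemma CRInt_norm g a b M : a <= b -> path_continuous_on g a b ->
  (forall t, a <= t <= b -> Cmod (g t) <= M) -> Cmod (CRInt g a b) <= 2 * ((b - a) * M).
Proof.
  intros Hab Hg HM. eapply Rle_trans; [apply Cmod_le_Re_Im|]. unfold CRInt, Re, Im; simpl.
  assert (Rabs (RInt (fun t => Re (g t)) a b) <= (b - a) * M).
  { apply abs_RInt_le_const; auto. apply ex_RInt_Re; auto.
    intros t Ht. eapply Rle_trans; [apply re_le_Cmod|]. apply HM; auto. }
  assert (Rabs (RInt (fun t => Im (g t)) a b) <= (b - a) * M).
  { apply abs_RInt_le_const; auto. apply ex_RInt_Im; auto.
    intros t Ht. eapply Rle_trans; [apply Im_le_Cmod|]. apply HM; auto. }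
  unfold Re, Im in *. lra.
Qed.

Lemma CRInt_derive (G g : R -> C) a b : a <= b ->
  (forall t, a <= t <= b -> is_path_derive G t (g t)) ->
  path_continuous_on g a b -> CRInt g a b = (G b - G a)%C.
Proof.
  intros Hab HD Hg. unfold CRInt, Cminus, Cplus, Copp.
  apply injective_projections; cbn [fst snd]; apply (is_RInt_unique (V:=R_CompleteNormedModule)).
  - apply (is_RInt_derive (V:=R_CompleteNormedModule) (fun s => Re (G s)));
      intros x Hx; rewrite Rmin_left, Rmax_right in Hx by auto.
    + apply HD; auto.
    + apply path_continuous_Re, Hg; auto.
  - apply (is_RInt_derive (V:=R_CompleteNormedModule) (fun s => Im (G s)));
      intros x Hx; rewrite Rmin_left, Rmax_right in Hx by auto.
    + apply HD; auto.
    + apply path_continuous_Im, Hg; auto.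
Qed.

Definition rect_integral (f : C -> C) (x0 x1 y0 y1 : R) : C :=
  (CRInt (fun x => f (x, y0)) x0 x1 + Ci * CRInt (fun y => f (x1, y)) y0 y1
   - CRInt (fun x => f (x, y1)) x0 x1 - Ci * CRInt (fun y => f (x0, y)) y0 y1)%C.

Definition continuous_on_boundary (f : C -> C) (x0 x1 y0 y1 : R) : Prop :=
  (forall x, x0 <= x <= x1 -> Ccontinuous f (x, y0) /\ Ccontinuous f (x, y1)) /\
  (forall y, y0 <= y <= y1 -> Ccontinuous f (x0, y) /\ Ccontinuous f (x1, y)).

Definition continuous_on_rect (f : C -> C) (x0 x1 y0 y1 : R) : Prop :=
  forall x y, x0 <= x <= x1 -> y0 <= y <= y1 -> Ccontinuous f (x, y).

Lemma continuous_on_rect_boundary f x0 x1 y0 y1 : x0 <= x1 -> y0 <= y1 ->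
  continuous_on_rect f x0 x1 y0 y1 -> continuous_on_boundary f x0 x1 y0 y1.
Proof. intros Hx Hy H. split; intros; split; apply H; lra. Qed.

Lemma continuous_on_boundary_scal (c : C) f x0 x1 y0 y1 :
  continuous_on_boundary f x0 x1 y0 y1 ->
  continuous_on_boundary (fun z => c * f z)%C x0 x1 y0 y1.
Proof.
  intros [H1 H2]. split; intros t Ht; split; apply Ccontinuous_scal;
    first [apply (H1 t Ht) | apply (H2 t Ht)].
Qed.

Lemma horizontal_continuous_on f y a b :
  (forall x, a <= x <= b -> Ccontinuous f (x, y)) -> path_continuous_on (fun x => f (x, y)) a b.
Proof. intros H t Ht. apply Ccontinuous_horizontal, H; auto. Qed.

Lemma vertical_continuous_on f x a b :
  (forall y, a <= y <= b -> Ccontinuous f (x, y)) -> path_continuous_on (fun y => f (x, y)) a b.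
Proof. intros H t Ht. apply Ccontinuous_vertical, H; auto. Qed.

Ltac edge_continuity H1 H2 :=
  first [apply horizontal_continuous_on | apply vertical_continuous_on];
  intros; first [apply H1 | apply H2]; auto.

Lemma rect_integral_plus f g x0 x1 y0 y1 : x0 <= x1 -> y0 <= y1 ->
  continuous_on_boundary f x0 x1 y0 y1 -> continuous_on_boundary g x0 x1 y0 y1 ->
  rect_integral (fun z => f z + g z)%C x0 x1 y0 y1
  = (rect_integral f x0 x1 y0 y1 + rect_integral g x0 x1 y0 y1)%C.
Proof.
  intros Hx Hy [Hf1 Hf2] [Hg1 Hg2]. unfold rect_integral.
  rewrite !(CRInt_plus (fun x => f (x, _)) (fun x => g (x, _))),
          !(CRInt_plus (fun y => f (_, y)) (fun y => g (_, y))); auto.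
  - ring.
  all: first [edge_continuity Hf1 Hf2 | edge_continuity Hg1 Hg2].
Qed.

Lemma rect_integral_scal f (c : C) x0 x1 y0 y1 : x0 <= x1 -> y0 <= y1 ->
  continuous_on_boundary f x0 x1 y0 y1 ->
  rect_integral (fun z => c * f z)%C x0 x1 y0 y1 = (c * rect_integral f x0 x1 y0 y1)%C.
Proof.
  intros Hx Hy [Hf1 Hf2]. unfold rect_integral.
  rewrite !(CRInt_scal (fun x => f (x, _))), !(CRInt_scal (fun y => f (_, y))); auto.
  - ring.
  all: edge_continuity Hf1 Hf2.
Qed.

Lemma rect_integral_minus f g x0 x1 y0 y1 : x0 <= x1 -> y0 <= y1 ->
  continuous_on_boundary f x0 x1 y0 y1 -> continuous_on_boundary g x0 x1 y0 y1 ->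
  rect_integral (fun z => f z - g z)%C x0 x1 y0 y1
  = (rect_integral f x0 x1 y0 y1 - rect_integral g x0 x1 y0 y1)%C.
Proof.
  intros Hx Hy Hf Hg.
  replace (fun z => f z - g z)%C with (fun z => f z + (- (1)) * g z)%C
    by (apply functional_extensionality; intros; ring).
  rewrite rect_integral_plus, rect_integral_scal; auto.
  - ring.
  - apply continuous_on_boundary_scal; auto.
Qed.

Lemma rect_integral_ext f g x0 x1 y0 y1 : x0 <= x1 -> y0 <= y1 ->
  (forall x, x0 <= x <= x1 -> f (x, y0) = g (x, y0) /\ f (x, y1) = g (x, y1)) ->
  (forall y, y0 <= y <= y1 -> f (x0, y) = g (x0, y) /\ f (x1, y) = g (x1, y)) ->
  rect_integral f x0 x1 y0 y1 = rect_integral g x0 x1 y0 y1.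
Proof.
  intros Hx Hy H1 H2. unfold rect_integral.
  rewrite (CRInt_ext (fun x => f (x, y0)) (fun x => g (x, y0))),
          (CRInt_ext (fun x => f (x, y1)) (fun x => g (x, y1))),
          (CRInt_ext (fun y => f (x0, y)) (fun y => g (x0, y))),
          (CRInt_ext (fun y => f (x1, y)) (fun y => g (x1, y))); auto;
    intros t Ht; first [apply H1 | apply H2]; auto.
Qed.

Lemma rect_integral_split_x f x0 xm x1 y0 y1 : x0 <= xm -> xm <= x1 -> y0 <= y1 ->
  continuous_on_rect f x0 x1 y0 y1 ->
  rect_integral f x0 x1 y0 y1 = (rect_integral f x0 xm y0 y1 + rect_integral f xm x1 y0 y1)%C.
Proof.
  intros H1 H2 Hy Hf. unfold rect_integral.
  rewrite <- (CRInt_Chasles (fun x => f (x, y0)) x0 xm x1),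
          <- (CRInt_Chasles (fun x => f (x, y1)) x0 xm x1); auto.
  - ring.
  all: apply horizontal_continuous_on; intros; apply Hf; lra.
Qed.

Lemma rect_integral_split_y f x0 x1 y0 ym y1 : y0 <= ym -> ym <= y1 -> x0 <= x1 ->
  continuous_on_rect f x0 x1 y0 y1 ->
  rect_integral f x0 x1 y0 y1 = (rect_integral f x0 x1 y0 ym + rect_integral f x0 x1 ym y1)%C.
Proof.
  intros H1 H2 Hx Hf. unfold rect_integral.
  rewrite <- (CRInt_Chasles (fun y => f (x0, y)) y0 ym y1),
          <- (CRInt_Chasles (fun y => f (x1, y)) y0 ym y1); auto.
  - ring.
  all: apply vertical_continuous_on; intros; apply Hf; lra.
Qed.

Lemma rect_integral_norm f x0 x1 y0 y1 M : x0 <= x1 -> y0 <= y1 ->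
  continuous_on_boundary f x0 x1 y0 y1 ->
  (forall x, x0 <= x <= x1 -> Cmod (f (x, y0)) <= M /\ Cmod (f (x, y1)) <= M) ->
  (forall y, y0 <= y <= y1 -> Cmod (f (x0, y)) <= M /\ Cmod (f (x1, y)) <= M) ->
  Cmod (rect_integral f x0 x1 y0 y1) <= 4 * ((x1 - x0) + (y1 - y0)) * M.
Proof.
  intros Hx Hy [Hf1 Hf2] HM1 HM2. unfold rect_integral.
  set (a := CRInt (fun x => f (x, y0)) x0 x1). set (c := CRInt (fun x => f (x, y1)) x0 x1).
  set (b := CRInt (fun y => f (x1, y)) y0 y1). set (d := CRInt (fun y => f (x0, y)) y0 y1).
  assert (Cmod a <= 2 * ((x1 - x0) * M)).
  { apply CRInt_norm; auto. edge_continuity Hf1 Hf2. apply HM1. }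
  assert (Cmod c <= 2 * ((x1 - x0) * M)).
  { apply CRInt_norm; auto. edge_continuity Hf1 Hf2. apply HM1. }
  assert (Cmod b <= 2 * ((y1 - y0) * M)).
  { apply CRInt_norm; auto. edge_continuity Hf1 Hf2. apply HM2. }
  assert (Cmod d <= 2 * ((y1 - y0) * M)).
  { apply CRInt_norm; auto. edge_continuity Hf1 Hf2. apply HM2. }
  replace (a + Ci * b - c - Ci * d)%C with (a + Ci * b + (- c) + - (Ci * d))%C by ring.
  eapply Rle_trans; [apply Cmod_triangle|]. rewrite !Cmod_opp.
  eapply Rle_trans; [apply Rplus_le_compat_r; apply Cmod_triangle3|].
  rewrite !Cmod_mult, !Cmod_Ci, Cmod_opp. lra.
Qed.

Lemma rect_integral_primitive (F f : C -> C) x0 x1 y0 y1 : x0 <= x1 -> y0 <= y1 ->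
  continuous_on_boundary f x0 x1 y0 y1 ->
  (forall x, x0 <= x <= x1 -> is_Cderive F (x, y0) (f (x, y0)) /\ is_Cderive F (x, y1) (f (x, y1))) ->
  (forall y, y0 <= y <= y1 -> is_Cderive F (x0, y) (f (x0, y)) /\ is_Cderive F (x1, y) (f (x1, y))) ->
  rect_integral f x0 x1 y0 y1 = RtoC 0.
Proof.
  intros Hx Hy [Hf1 Hf2] HD1 HD2. unfold rect_integral.
  assert (Eh : forall y, y = y0 \/ y = y1 ->
            CRInt (fun x => f (x, y)) x0 x1 = (F (x1, y) - F (x0, y))%C).
  { intros y Ey. apply (CRInt_derive (fun x => F (x, y))); auto.
    - intros t Ht. apply is_Cderive_horizontal. destruct Ey; subst; apply HD1; auto.
    - apply horizontal_continuous_on. intros. destruct Ey; subst; apply Hf1; auto. }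
  assert (Ev : forall x, x = x0 \/ x = x1 ->
            (Ci * CRInt (fun y => f (x, y)) y0 y1)%C = (F (x, y1) - F (x, y0))%C).
  { intros x Ex. rewrite <- CRInt_scal; auto.
    - apply (CRInt_derive (fun y => F (x, y))); auto.
      + intros t Ht. apply is_Cderive_vertical. destruct Ex; subst; apply HD2; auto.
      + apply (vertical_continuous_on (fun z => Ci * f z)%C). intros.
        apply Ccontinuous_scal. destruct Ex; subst; apply Hf2; auto.
    - apply vertical_continuous_on. intros. destruct Ex; subst; apply Hf2; auto. }
  rewrite !Eh, !Ev by auto. ring.
Qed.

(** * Goursat's theorem *)

Lemma le_0_of_le_eps (alpha K : R) : (forall eps, 0 < eps -> alpha <= eps * K) -> alpha <= 0.
Proof.
  intros H. destruct (Rle_or_lt alpha 0) as [|Ha]; auto.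
  assert (HK : 0 < K) by (specialize (H 1 Rlt_0_1); lra).
  specialize (H (alpha / (2 * K)) ltac:(apply Rdiv_lt_0_compat; lra)).
  replace (alpha / (2 * K) * K) with (alpha / 2) in H by (field; lra). lra.
Qed.

Lemma exists_pow2_small (s del : R) : 0 < del -> exists n, s / 2 ^ n < del.
Proof.
  intros Hd. destruct (pow_lt_1_zero (/ 2) ltac:(rewrite Rabs_pos_eq; lra) (del / (Rabs s + 1)))
    as [N HN]; [apply Rdiv_lt_0_compat; pose proof (Rabs_pos s); lra|].
  exists N. specialize (HN N (Nat.le_refl N)).
  rewrite Rabs_pos_eq in HN by (apply pow_le; lra). rewrite pow_inv in HN.
  assert (H2 : 0 < 2 ^ N) by (apply pow_lt; lra).
  apply Rle_lt_trans with (Rabs s / 2 ^ N).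
  - unfold Rdiv. apply Rmult_le_compat_r; [left; apply Rinv_0_lt_compat; lra|apply Rle_abs].
  - pose proof (Rabs_pos s). apply Rmult_lt_reg_r with (/ (Rabs s + 1)); [apply Rinv_0_lt_compat; lra|].
    apply Rle_lt_trans with (/ 2 ^ N); [|exact HN].
    unfold Rdiv. rewrite Rmult_assoc, (Rmult_comm (/ 2 ^ N)), <- Rmult_assoc.
    rewrite <- (Rmult_1_l (/ 2 ^ N)) at 2. apply Rmult_le_compat_r; [left; apply Rinv_0_lt_compat; lra|].
    apply Rmult_le_reg_r with (Rabs s + 1); [lra|]. rewrite Rmult_assoc, Rinv_l by lra. lra.
Qed.

Lemma nested_intervals_point (a b : nat -> R) :
  (forall n, a n <= a (S n)) -> (forall n, b (S n) <= b n) -> (forall n, a n <= b n) ->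
  exists p, forall n, a n <= p <= b n.
Proof.
  intros Ha Hb Hab.
  assert (Hmono : forall n k, a n <= a (k + n)%nat /\ b (k + n)%nat <= b n).
  { intros n k. induction k as [|k IH]; simpl; [lra|]. specialize (Ha (k + n)%nat).
    specialize (Hb (k + n)%nat). lra. }
  assert (Hnest : forall n m, a n <= b m).
  { intros n m. destruct (Nat.le_ge_cases n m) as [Hnm|Hnm].
    - destruct (Hmono n (m - n)%nat) as [H _]. replace (m - n + n)%nat with m in H by lia.
      specialize (Hab m). lra.
    - destruct (Hmono m (n - m)%nat) as [_ H]. replace (n - m + m)%nat with n in H by lia.
      specialize (Hab n). lra. }
  destruct (completeness (fun r => exists n, r = a n)) as [p Hp].
  - exists (b O). intros r [n ->]. apply Hnest.
  - exists (a O). exists O; auto.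
  - exists p. intros n. split.
    + apply Hp. exists n; auto.
    + apply Hp. intros r [m ->]. apply Hnest.
Qed.

Record rect := mkrect { rx0 : R; rx1 : R; ry0 : R; ry1 : R }.

Definition rect_int (f : C -> C) (r : rect) : C := rect_integral f (rx0 r) (rx1 r) (ry0 r) (ry1 r).

Definition wf_rect (r : rect) : Prop := rx0 r <= rx1 r /\ ry0 r <= ry1 r.

Definition perimeter (r : rect) : R := (rx1 r - rx0 r) + (ry1 r - ry0 r).

Definition subrect (r' r : rect) : Prop :=
  rx0 r <= rx0 r' /\ rx1 r' <= rx1 r /\ ry0 r <= ry0 r' /\ ry1 r' <= ry1 r.

Section Quadrisection.

Variable r : rect.
Let xm := (rx0 r + rx1 r) / 2.
Let ym := (ry0 r + ry1 r) / 2.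

Definition quarter1 := mkrect (rx0 r) xm (ry0 r) ym.
Definition quarter2 := mkrect xm (rx1 r) (ry0 r) ym.
Definition quarter3 := mkrect (rx0 r) xm ym (ry1 r).
Definition quarter4 := mkrect xm (rx1 r) ym (ry1 r).

End Quadrisection.

Lemma rect_int_quarters f r : wf_rect r -> continuous_on_rect f (rx0 r) (rx1 r) (ry0 r) (ry1 r) ->
  rect_int f r
  = (rect_int f (quarter1 r) + rect_int f (quarter2 r)
     + rect_int f (quarter3 r) + rect_int f (quarter4 r))%C.
Proof.
  destruct r as [a b c d]. unfold wf_rect, rect_int; simpl. intros [H1 H2] Hf.
  rewrite (rect_integral_split_x f a ((a + b) / 2) b) by (auto; lra).
  rewrite (rect_integral_split_y f a ((a + b) / 2) c ((c + d) / 2) d)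
    by (auto; try lra; intros x y Hx Hy; apply Hf; lra).
  rewrite (rect_integral_split_y f ((a + b) / 2) b c ((c + d) / 2) d)
    by (auto; try lra; intros x y Hx Hy; apply Hf; lra).
  ring.
Qed.

Definition goursat_step (f : C -> C) (r : rect) : rect :=
  let big q := Rle_dec (Cmod (rect_int f r) / 4) (Cmod (rect_int f q)) in
  if big (quarter1 r) then quarter1 r else
  if big (quarter2 r) then quarter2 r else
  if big (quarter3 r) then quarter3 r else quarter4 r.

Lemma goursat_step_spec f r : wf_rect r -> continuous_on_rect f (rx0 r) (rx1 r) (ry0 r) (ry1 r) ->
  Cmod (rect_int f r) / 4 <= Cmod (rect_int f (goursat_step f r)) /\
  subrect (goursat_step f r) r /\
  rx1 (goursat_step f r) - rx0 (goursat_step f r) = (rx1 r - rx0 r) / 2 /\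
  ry1 (goursat_step f r) - ry0 (goursat_step f r) = (ry1 r - ry0 r) / 2.
Proof.
  intros Hr Hf. pose proof (rect_int_quarters f r Hr Hf) as Hsum.
  destruct r as [a b c d]. unfold wf_rect, subrect in *; simpl in *. unfold goursat_step.
  destruct (Rle_dec _ _) as [E1|E1]; [simpl; repeat split; auto; lra|].
  destruct (Rle_dec _ _) as [E2|E2]; [simpl; repeat split; auto; lra|].
  destruct (Rle_dec _ _) as [E3|E3]; [simpl; repeat split; auto; lra|].
  split; [|simpl; repeat split; lra].
  apply Rnot_le_lt in E1, E2, E3. rewrite Hsum in E1, E2, E3 |- *.
  pose proof (Cmod_triangle3 (rect_int f (quarter1 (mkrect a b c d)))
    (rect_int f (quarter2 (mkrect a b c d))) (rect_int f (quarter3 (mkrect a b c d)))).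
  pose proof (Cmod_triangle (rect_int f (quarter1 (mkrect a b c d)) + rect_int f (quarter2 (mkrect a b c d))
    + rect_int f (quarter3 (mkrect a b c d))) (rect_int f (quarter4 (mkrect a b c d)))).
  lra.
Qed.

Lemma subrect_trans r1 r2 r3 : subrect r1 r2 -> subrect r2 r3 -> subrect r1 r3.
Proof. unfold subrect. lra. Qed.

Lemma goursat_sequence_spec f q0 : wf_rect q0 -> continuous_on_rect f (rx0 q0) (rx1 q0) (ry0 q0) (ry1 q0) ->
  forall n, let q := Nat.iter n (goursat_step f) q0 in
  wf_rect q /\ subrect q q0 /\ subrect (goursat_step f q) q /\
  perimeter q = perimeter q0 / 2 ^ n /\
  Cmod (rect_int f q0) / 4 ^ n <= Cmod (rect_int f q).
Proof.
  intros Hq0 Hf n. induction n as [|n IH]; simpl.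
  - unfold subrect, Rdiv. rewrite !Rinv_1, !Rmult_1_r.
    destruct (goursat_step_spec f q0 Hq0 Hf) as (_ & Hsub & _). unfold subrect in *.
    repeat split; try lra; apply Hq0.
  - set (q := Nat.iter n (goursat_step f) q0) in *. destruct IH as (Hw & Hs & _ & Hp & Hb).
    assert (Hfq : continuous_on_rect f (rx0 q) (rx1 q) (ry0 q) (ry1 q)).
    { intros x y Hx Hy. unfold subrect in Hs. apply Hf; lra. }
    destruct (goursat_step_spec f q Hw Hfq) as (B1 & B2 & B3 & B4).
    assert (Hw' : wf_rect (goursat_step f q)) by (unfold wf_rect, subrect in *; lra).
    assert (Hfq' : continuous_on_rect f (rx0 (goursat_step f q)) (rx1 (goursat_step f q))
                     (ry0 (goursat_step f q)) (ry1 (goursat_step f q))).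
    { intros x y Hx Hy. unfold subrect in B2. apply Hfq; lra. }
    destruct (goursat_step_spec f _ Hw' Hfq') as (_ & C2 & _).
    assert (P2 : 0 < 2 ^ n) by (apply pow_lt; lra).
    assert (P4 : 0 < 4 ^ n) by (apply pow_lt; lra).
    refine (conj Hw' (conj _ (conj C2 (conj _ _)))).
    + eapply subrect_trans; eauto.
    + unfold perimeter in *. rewrite B3, B4. replace (rx1 q - rx0 q) with
        ((rx1 q - rx0 q) + (ry1 q - ry0 q) - (ry1 q - ry0 q)) by ring. rewrite Hp. field. lra.
    + apply Rle_trans with (Cmod (rect_int f q) / 4); [|lra].
      replace (Cmod (rect_int f q0) / (4 * 4 ^ n)) with (Cmod (rect_int f q0) / 4 ^ n / 4)
        by (field; lra). lra.
Qed.

(** Near a point of differentiability, [f] is an affine function (whose rectangle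
    integral vanishes) plus an error of order [eps * perimeter]. *)
Lemma rect_int_near_derivative f p l eps del q : wf_rect q ->
  continuous_on_rect f (rx0 q) (rx1 q) (ry0 q) (ry1 q) -> 0 <= eps ->
  (forall y, Cmod (y - p) < del -> Cmod (f y - f p - l * (y - p)) <= eps * Cmod (y - p)) ->
  rx0 q <= Re p <= rx1 q -> ry0 q <= Im p <= ry1 q -> perimeter q < del ->
  Cmod (rect_int f q) <= 4 * eps * (perimeter q * perimeter q).
Proof.
  destruct q as [a b c d]. unfold wf_rect, perimeter, rect_int; simpl.
  intros [Hab Hcd] Hf He Hdl Hpx Hpy Hs.
  set (aff := fun z => (f p + l * (z - p) + 0 * (z - p) * (z - p))%C).
  set (prim := fun z => (0 + f p * (z - p) + l / 2 * (z - p) * (z - p))%C).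
  assert (Haff : continuous_on_rect aff a b c d)
    by (intros x y _ _; eapply is_Cderive_continuous, is_Cderive_quadratic).
  assert (Dprim : forall z, is_Cderive prim z (aff z)).
  { intros z. pose proof (is_Cderive_quadratic 0 (f p) (l / 2) p z) as H.
    replace (f p + 2 * (l / 2) * (z - p))%C with (aff z) in H by (unfold aff; field). exact H. }
  assert (E0 : rect_integral aff a b c d = RtoC 0).
  { apply (rect_integral_primitive prim); try (intros; split; apply Dprim); auto.
    apply continuous_on_rect_boundary; auto. }
  assert (Hnear : forall x y, a <= x <= b -> c <= y <= d ->
            Cmod (f (x, y) - aff (x, y)) <= eps * ((b - a) + (d - c))).
  { intros x y Hx Hy.
    assert (Hz : Cmod ((x, y) - p)%C <= (b - a) + (d - c)).
    { eapply Rle_trans; [apply Cmod_le_Re_Im|]. unfold Re, Im in *; simpl.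
      apply Rplus_le_compat; apply Rabs_le; lra. }
    specialize (Hdl (x, y) (Rle_lt_trans _ _ _ Hz Hs)).
    replace (f (x, y) - aff (x, y))%C with (f (x, y) - f p - l * ((x, y) - p))%C
      by (unfold aff; ring).
    eapply Rle_trans; [exact Hdl|]. apply Rmult_le_compat_l; auto. }
  replace (rect_integral f a b c d) with (rect_integral (fun z => f z - aff z)%C a b c d)
    by (rewrite rect_integral_minus, E0 by (auto; apply continuous_on_rect_boundary; auto); ring).
  replace (4 * eps * (((b - a) + (d - c)) * ((b - a) + (d - c))))
    with (4 * ((b - a) + (d - c)) * (eps * ((b - a) + (d - c)))) by ring.
  apply rect_integral_norm; auto.
  - apply continuous_on_rect_boundary; auto. intros x y Hx Hy.
    apply Ccontinuous_minus; [apply Hf | apply Haff]; auto.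
  - intros; split; apply Hnear; lra.
  - intros; split; apply Hnear; lra.
Qed.

Theorem goursat f x0 x1 y0 y1 : x0 <= x1 -> y0 <= y1 ->
  (forall x y, x0 <= x <= x1 -> y0 <= y <= y1 -> ex_Cderive f (x, y)) ->
  rect_integral f x0 x1 y0 y1 = RtoC 0.
Proof.
  intros Hx Hy HD. set (q0 := mkrect x0 x1 y0 y1).
  assert (Hq0 : wf_rect q0) by (split; simpl; auto).
  assert (Hf : continuous_on_rect f x0 x1 y0 y1)
    by (intros x y Hx' Hy'; apply ex_Cderive_continuous, HD; auto).
  pose proof (goursat_sequence_spec f q0 Hq0 Hf) as Hqs.
  set (qs := fun n => Nat.iter n (goursat_step f) q0) in Hqs.
  assert (Hstep : forall n, subrect (qs (S n)) (qs n)) by (intros n; apply (Hqs n)).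
  assert (Hwf : forall n, wf_rect (qs n)) by (intros n; apply (Hqs n)).
  destruct (nested_intervals_point (fun n => rx0 (qs n)) (fun n => rx1 (qs n))) as [px Hpx];
    try (intros n; specialize (Hstep n); specialize (Hwf n); unfold subrect, wf_rect in *; lra).
  destruct (nested_intervals_point (fun n => ry0 (qs n)) (fun n => ry1 (qs n))) as [py Hpy];
    try (intros n; specialize (Hstep n); specialize (Hwf n); unfold subrect, wf_rect in *; lra).
  assert (Hpin : x0 <= px <= x1 /\ y0 <= py <= y1).
  { specialize (Hpx O). specialize (Hpy O). simpl in *. lra. }
  destruct (HD px py (proj1 Hpin) (proj2 Hpin)) as [l Hl].
  apply Cmod_eq_0. apply Rle_antisym; [|apply Cmod_ge_0].
  apply (le_0_of_le_eps _ (4 * (perimeter q0 * perimeter q0))). intros eps He.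
  destruct (Hl eps He) as [del [Hdel Hdl]].
  destruct (exists_pow2_small (perimeter q0) del Hdel) as [n Hn].
  destruct (Hqs n) as (Hw & Hsub & _ & Hper & Hbound).
  change (Nat.iter n (goursat_step f) q0) with (qs n) in *.
  assert (Hloc : Cmod (rect_int f (qs n)) <= 4 * eps * (perimeter (qs n) * perimeter (qs n))).
  { apply (rect_int_near_derivative f (px, py) l eps del); auto; try lra.
    intros x y Hx' Hy'. unfold subrect in Hsub. apply Hf; simpl in *; lra. }
  assert (H2n : 0 < 2 ^ n) by (apply pow_lt; lra).
  replace (4 ^ n) with (2 ^ n * 2 ^ n) in Hbound
    by (rewrite <- Rpow_mult_distr; f_equal; lra).
  rewrite Hper in Hloc. change (rect_int f q0) with (rect_integral f x0 x1 y0 y1) in Hbound.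
  apply Rmult_le_reg_r with (/ (2 ^ n * 2 ^ n)); [apply Rinv_0_lt_compat; nra|].
  eapply Rle_trans; [exact Hbound|]. eapply Rle_trans; [exact Hloc|]. right; field; lra.
Qed.

Lemma rect_integral_shrink_to_point g x0 x1 y0 y1 (w : C) del : 0 < del ->
  x0 <= Re w - del -> Re w + del <= x1 -> y0 <= Im w - del -> Im w + del <= y1 ->
  continuous_on_rect g x0 x1 y0 y1 ->
  (forall x y, x0 <= x <= x1 -> y0 <= y <= y1 -> (x, y) <> w -> ex_Cderive g (x, y)) ->
  rect_integral g x0 x1 y0 y1 = rect_integral g (Re w - del) (Re w + del) (Im w - del) (Im w + del).
Proof.
  intros Hdel H1 H2 H3 H4 Hok HD.
  set (a := Re w - del) in *. set (b := Re w + del) in *.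
  set (c := Im w - del) in *. set (d := Im w + del) in *.
  assert (Hsub : forall x0' x1' y0' y1', x0 <= x0' -> x1' <= x1 -> y0 <= y0' -> y1' <= y1 ->
            continuous_on_rect g x0' x1' y0' y1') by (intros; intros x y ? ?; apply Hok; lra).
  assert (Hx : forall x y, x <> Re w -> (x, y) <> w) by (intros x y H E; apply H; rewrite <- E; reflexivity).
  assert (Hy : forall x y, y <> Im w -> (x, y) <> w) by (intros x y H E; apply H; rewrite <- E; reflexivity).
  rewrite (rect_integral_split_x g x0 a x1), (rect_integral_split_x g a b x1),
          (rect_integral_split_y g a b y0 c y1), (rect_integral_split_y g a b c d y1)
    by (unfold a, b, c, d in *; auto; try lra; apply Hsub; lra).
  rewrite (goursat g x0 a y0 y1), (goursat g b x1 y0 y1), (goursat g a b y0 c), (goursat g a b d y1)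
    by (unfold a, b, c, d in *; try lra; intros x y Hx' Hy'; apply HD; try lra;
        first [apply Hx; lra | apply Hy; lra]).
  ring.
Qed.

Theorem goursat_except_point g x0 x1 y0 y1 (w : C) :
  x0 < Re w < x1 -> y0 < Im w < y1 -> continuous_on_rect g x0 x1 y0 y1 ->
  (forall x y, x0 <= x <= x1 -> y0 <= y <= y1 -> (x, y) <> w -> ex_Cderive g (x, y)) ->
  rect_integral g x0 x1 y0 y1 = RtoC 0.
Proof.
  intros Hx Hy Hok HD.
  destruct (Hok (Re w) (Im w) ltac:(lra) ltac:(lra) 1 Rlt_0_1) as [d0 [Hd0 Hc]].
  replace (Re w, Im w) with w in Hc by (destruct w; reflexivity).
  set (M := Cmod (g w) + 1).
  set (m := Rmin (Rmin (d0 / 2) (Rmin (Re w - x0) (x1 - Re w))) (Rmin (Im w - y0) (y1 - Im w))).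
  assert (Hm : 0 < m /\ m <= d0 / 2 /\ m <= Re w - x0 /\ m <= x1 - Re w /\
               m <= Im w - y0 /\ m <= y1 - Im w)
    by (unfold m, Rmin; repeat destruct Rle_dec; lra).
  apply Cmod_eq_0. apply Rle_antisym; [|apply Cmod_ge_0].
  apply (le_0_of_le_eps _ (16 * M)). intros eps He.
  set (del := Rmin (m / 2) eps).
  assert (Hdel : 0 < del /\ del <= m / 2 /\ del <= eps) by (unfold del, Rmin; destruct Rle_dec; lra).
  rewrite (rect_integral_shrink_to_point g x0 x1 y0 y1 w del) by (auto; lra).
  assert (Hnear : forall x y, Re w - del <= x <= Re w + del -> Im w - del <= y <= Im w + del ->
                   Cmod (g (x, y)) <= M).
  { intros x y Hx' Hy'.
    assert (Hxy : Cmod ((x, y) - w)%C < d0).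
    { eapply Rle_lt_trans; [apply Cmod_le_Re_Im|].
      replace (Re ((x, y) - w)%C) with (x - Re w) by (unfold Re; simpl; ring).
      replace (Im ((x, y) - w)%C) with (y - Im w) by (unfold Im; simpl; ring).
      apply Rle_lt_trans with (del + del); [|lra]. apply Rplus_le_compat; apply Rabs_le; lra. }
    specialize (Hc _ Hxy). pose proof (Cmod_le_sub_plus (g (x, y)) (g w)). unfold M; lra. }
  eapply Rle_trans; [apply rect_integral_norm; try lra|].
  - apply continuous_on_rect_boundary; try lra. intros x y Hx' Hy'. apply Hok; lra.
  - intros; split; apply Hnear; lra.
  - intros; split; apply Hnear; lra.
  - pose proof (Cmod_ge_0 (g w)). unfold M in *. nra.
Qed.

(** * Cauchy's formula on a square *)

Definition on_square_boundary (rho : R) (z : C) : Prop :=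
  Rabs (Re z) <= rho /\ Rabs (Im z) <= rho /\ (Rabs (Re z) = rho \/ Rabs (Im z) = rho).

Definition square_integral (f : C -> C) (rho : R) : C := rect_integral f (-rho) rho (-rho) rho.

Definition holomorphic_on_square (f : C -> C) (rho : R) : Prop :=
  forall x y, Rabs x <= rho -> Rabs y <= rho -> ex_Cderive f (x, y).

Lemma square_boundary_far rho z w : 0 < rho -> on_square_boundary rho z -> Cmod w < rho / 2 ->
  rho <= Cmod z /\ rho / 2 <= Cmod (z - w).
Proof.
  intros Hr [H1 [H2 H3]] Hw.
  pose proof (re_le_Cmod z). pose proof (Im_le_Cmod z).
  pose proof (re_le_Cmod w). pose proof (Im_le_Cmod w).
  pose proof (re_le_Cmod (z - w)%C). pose proof (Im_le_Cmod (z - w)%C).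
  replace (Re (z - w)%C) with (Re z - Re w) in * by (unfold Re; simpl; ring).
  replace (Im (z - w)%C) with (Im z - Im w) in * by (unfold Im; simpl; ring).
  split; [destruct H3; lra|].
  destruct H3 as [H3|H3].
  - pose proof (Rabs_triang_inv (Re z) (Re w)). lra.
  - pose proof (Rabs_triang_inv (Im z) (Im w)). lra.
Qed.

Lemma square_boundary_ne rho z w : 0 < rho -> on_square_boundary rho z -> Cmod w < rho / 2 ->
  (z - w)%C <> RtoC 0 /\ z <> RtoC 0.
Proof.
  intros Hr Hb Hw. destruct (square_boundary_far rho z w Hr Hb Hw) as [A B].
  split; intro E; [rewrite E, Cmod_0 in B | rewrite E, Cmod_0 in A]; lra.
Qed.

Lemma square_boundary_edges rho t : 0 <= rho -> -rho <= t <= rho ->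
  on_square_boundary rho (t, -rho) /\ on_square_boundary rho (t, rho) /\
  on_square_boundary rho (-rho, t) /\ on_square_boundary rho (rho, t).
Proof.
  intros Hr Ht. unfold on_square_boundary, Re, Im; simpl.
  assert (E : Rabs rho = rho) by (apply Rabs_pos_eq; lra).
  rewrite Rabs_Ropp, E. assert (Rabs t <= rho) by (apply Rabs_le; lra).
  repeat split; auto; lra.
Qed.

Lemma continuous_on_square_boundary h rho : 0 <= rho ->
  (forall z, on_square_boundary rho z -> Ccontinuous h z) ->
  continuous_on_boundary h (-rho) rho (-rho) rho.
Proof.
  intros Hr H. split; intros t Ht; destruct (square_boundary_edges rho t Hr Ht) as (? & ? & ? & ?);
    split; apply H; auto.
Qed.

Lemma square_integral_ext f g rho : 0 <= rho ->
  (forall z, on_square_boundary rho z -> f z = g z) -> square_integral f rho = square_integral g rho.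
Proof.
  intros Hr H. unfold square_integral. apply rect_integral_ext; [lra | lra | |];
    intros t Ht; destruct (square_boundary_edges rho t Hr Ht) as (? & ? & ? & ?); split; apply H; auto.
Qed.

Lemma square_integral_norm f rho M : 0 <= rho -> continuous_on_boundary f (-rho) rho (-rho) rho ->
  (forall z, on_square_boundary rho z -> Cmod (f z) <= M) ->
  Cmod (square_integral f rho) <= 16 * rho * M.
Proof.
  intros Hr Hok H. unfold square_integral. replace (16 * rho * M) with (4 * ((rho - - rho) + (rho - - rho)) * M) by ring.
  apply rect_integral_norm; [lra | lra | auto | |];
    intros t Ht; destruct (square_boundary_edges rho t Hr Ht) as (? & ? & ? & ?); split; apply H; auto.
Qed.

Lemma square_boundary_bounded f rho : 0 < rho -> holomorphic_on_square f rho ->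
  exists M, 0 <= M /\ forall z, on_square_boundary rho z -> Cmod (f z) <= M.
Proof.
  intros Hr Hf.
  assert (Hc : forall x y, -rho <= x <= rho -> -rho <= y <= rho -> Ccontinuous f (x, y))
    by (intros; apply ex_Cderive_continuous, Hf; apply Rabs_le; lra).
  assert (Hedge : forall g : R -> C, path_continuous_on g (-rho) rho ->
            exists M, forall t, -rho <= t <= rho -> Cmod (g t) <= M).
  { intros g Hg. destruct (continuity_ab_maj (fun s => Cmod (g s)) (-rho) rho) as [x [Hx _]]; [lra| |].
    - intros c Hc'. apply path_continuous_Cmod, Hg; auto.
    - exists (Cmod (g x)). auto. }
  destruct (Hedge (fun t => f (t, - rho))) as [M1 H1]; [intros t Ht; apply Ccontinuous_horizontal, Hc; lra|].
  destruct (Hedge (fun t => f (t, rho))) as [M2 H2]; [intros t Ht; apply Ccontinuous_horizontal, Hc; lra|].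
  destruct (Hedge (fun t => f (- rho, t))) as [M3 H3]; [intros t Ht; apply Ccontinuous_vertical, Hc; lra|].
  destruct (Hedge (fun t => f (rho, t))) as [M4 H4]; [intros t Ht; apply Ccontinuous_vertical, Hc; lra|].
  exists (Rmax (Rmax (Rmax M1 M2) (Rmax M3 M4)) 0).
  assert (HM : forall m, m = M1 \/ m = M2 \/ m = M3 \/ m = M4 ->
            m <= Rmax (Rmax (Rmax M1 M2) (Rmax M3 M4)) 0)
    by (intros m Hm; unfold Rmax; repeat destruct Rle_dec; lra).
  split; [unfold Rmax; repeat destruct Rle_dec; lra|].
  intros [x y] [Hx [Hy Hor]]. unfold Re, Im in *; simpl in *.
  apply Rabs_le_between in Hx. apply Rabs_le_between in Hy.
  destruct Hor as [E|E]; [destruct (Rle_or_lt 0 x) | destruct (Rle_or_lt 0 y)].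
  - rewrite Rabs_pos_eq in E by auto. subst x. eapply Rle_trans; [apply H4; auto|]. apply HM; auto.
  - rewrite Rabs_left in E by auto. replace x with (- rho) by lra.
    eapply Rle_trans; [apply H3; auto|]. apply HM; auto.
  - rewrite Rabs_pos_eq in E by auto. subst y. eapply Rle_trans; [apply H2; auto|]. apply HM; auto.
  - rewrite Rabs_left in E by auto. replace y with (- rho) by lra.
    eapply Rle_trans; [apply H1; auto|]. apply HM; auto.
Qed.

(** [cauchy_moment f rho N w] is [∮ f(z) / (z^N (z - w)) dz] over the square boundary;
    its values at [w = 0] are the Taylor coefficients of [f] up to a factor [2 i pi]. *)
Definition cauchy_moment (f : C -> C) (rho : R) (N : nat) (w : C) : C :=
  square_integral (fun z => f z / (z ^ N * (z - w)))%C rho.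

Lemma cauchy_integrand_continuous f rho N w : 0 < rho -> holomorphic_on_square f rho ->
  Cmod w < rho / 2 -> continuous_on_boundary (fun z => f z / (z ^ N * (z - w)))%C (-rho) rho (-rho) rho.
Proof.
  intros Hr Hf Hw. apply continuous_on_square_boundary; [lra|]. intros z Hz.
  apply ex_Cderive_continuous. destruct (square_boundary_ne rho z w Hr Hz Hw) as [N1 N2].
  apply ex_Cderive_div.
  - destruct z as [x y]. destruct Hz as [H1 [H2 _]]. apply Hf; auto.
  - apply ex_Cderive_mult; [apply ex_Cderive_pow|].
    apply ex_Cderive_minus; [apply ex_Cderive_id | apply ex_Cderive_const].
  - apply Cmult_neq_0; auto. apply Cpow_nz; auto.
Qed.

Lemma cauchy_moment_succ f rho N w : 0 < rho -> holomorphic_on_square f rho -> Cmod w < rho / 2 ->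
  cauchy_moment f rho N w = (cauchy_moment f rho N (RtoC 0) + w * cauchy_moment f rho (S N) w)%C.
Proof.
  intros Hr Hf Hw.
  assert (Hw0 : Cmod (RtoC 0) < rho / 2) by (rewrite Cmod_0; lra).
  unfold cauchy_moment, square_integral.
  rewrite <- (rect_integral_scal _ w), <- rect_integral_plus; try lra.
  - apply square_integral_ext; [lra|]. intros z Hz.
    destruct (square_boundary_ne rho z w Hr Hz Hw) as [N1 N2].
    assert ((z ^ N)%C <> RtoC 0) by (apply Cpow_nz; auto).
    simpl. field. repeat split; auto.
  - apply cauchy_integrand_continuous; auto.
  - apply continuous_on_boundary_scal, cauchy_integrand_continuous; auto.
  - apply cauchy_integrand_continuous; auto.
Qed.

Lemma cauchy_moment_norm f rho N w M : 0 < rho -> holomorphic_on_square f rho -> Cmod w < rho / 2 ->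
  (forall z, on_square_boundary rho z -> Cmod (f z) <= M) ->
  Cmod (cauchy_moment f rho N w) <= 32 * M / rho ^ N.
Proof.
  intros Hr Hf Hw HM. unfold cauchy_moment.
  assert (HrN : 0 < rho ^ N) by (apply pow_lt; auto).
  eapply Rle_trans.
  - apply (square_integral_norm _ _ (M / (rho ^ N * (rho / 2)))); [lra | apply cauchy_integrand_continuous; auto |].
    intros z Hz.
    destruct (square_boundary_far rho z w Hr Hz Hw) as [A B].
    destruct (square_boundary_ne rho z w Hr Hz Hw) as [N1 N2].
    assert ((z ^ N)%C <> RtoC 0) by (apply Cpow_nz; auto).
    rewrite Cmod_div, Cmod_mult, Cmod_pow by (apply Cmult_neq_0; auto).
    pose proof (HM z Hz). pose proof (Cmod_ge_0 (f z)).
    assert (0 < Cmod z ^ N) by (apply pow_lt; lra).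
    unfold Rdiv. apply Rmult_le_compat; auto.
    + left; apply Rinv_0_lt_compat, Rmult_lt_0_compat; lra.
    + apply Rinv_le_contravar; [apply Rmult_lt_0_compat; lra|].
      apply Rmult_le_compat; [apply pow_le; lra | lra | apply pow_incr; lra | lra].
  - right. field. lra.
Qed.

Lemma cauchy_moment_expansion f rho k : 0 < rho -> holomorphic_on_square f rho ->
  (forall n, (n < k)%nat -> cauchy_moment f rho n (RtoC 0) = RtoC 0) ->
  forall w, Cmod w < rho / 2 -> cauchy_moment f rho 0 w = (w ^ k * cauchy_moment f rho k w)%C.
Proof.
  intros Hr Hf. induction k as [|k IH]; intros Hc w Hw; simpl; [ring|].
  rewrite IH, (cauchy_moment_succ f rho k w), Hc by auto. ring.
Qed.

Definition difference_quotient (f : C -> C) (w l z : C) : C :=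
  if Ceq_dec z w then l else ((f z - f w) / (z - w))%C.

Lemma difference_quotient_continuous f w l :
  is_Cderive f w l -> Ccontinuous (difference_quotient f w l) w.
Proof.
  intros Hl eps He. destruct (Hl (eps / 2)) as [d [Hd Hy]]; [lra|]. exists d; split; auto.
  intros y Hy'. unfold difference_quotient.
  destruct (Ceq_dec w w) as [_|]; [|tauto].
  destruct (Ceq_dec y w) as [E|E].
  - replace (l - l)%C with (RtoC 0) by ring. rewrite Cmod_0; lra.
  - assert (Hnz : (y - w)%C <> RtoC 0) by (intro E'; apply E, Cminus_eq_0; auto).
    assert (Hpos : 0 < Cmod (y - w)) by (apply Cmod_gt_0; auto).
    replace ((f y - f w) / (y - w) - l)%C with ((f y - f w - l * (y - w)) / (y - w))%C by (field; auto).
    rewrite Cmod_div by auto. specialize (Hy y Hy').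
    apply Rle_lt_trans with (eps / 2); [|lra].
    apply Rmult_le_reg_r with (Cmod (y - w)); auto. unfold Rdiv.
    rewrite Rmult_assoc, Rinv_l by lra. lra.
Qed.

Lemma difference_quotient_derive f w l z : z <> w -> ex_Cderive f z ->
  ex_Cderive (difference_quotient f w l) z.
Proof.
  intros Hne Hf.
  assert (Hpos : 0 < Cmod (z - w)) by (apply Cmod_gt_0; intro E; apply Hne, Cminus_eq_0; auto).
  assert (Hq : ex_Cderive (fun y => (f y - f w) / (y - w))%C z).
  { apply ex_Cderive_div; [apply ex_Cderive_minus; auto; apply ex_Cderive_const|
      apply ex_Cderive_minus; [apply ex_Cderive_id | apply ex_Cderive_const]|].
    intro E. apply Hne, Cminus_eq_0; auto. }
  destruct Hq as [l' Hq]. exists l'.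
  refine (is_Cderive_local _ _ _ _ _ Hpos _ Hq).
  intros y Hy. unfold difference_quotient. destruct (Ceq_dec y w) as [E|]; auto.
  subst y. rewrite Cmod_sub_sym in Hy. lra.
Qed.

Theorem cauchy_integral_formula f rho w : 0 < rho -> holomorphic_on_square f rho -> Cmod w < rho / 2 ->
  (f w * cauchy_moment (fun _ => RtoC 1) rho 0 w)%C = cauchy_moment f rho 0 w.
Proof.
  intros Hr Hf Hw.
  assert (Hwre : Rabs (Re w) < rho / 2) by (eapply Rle_lt_trans; [apply re_le_Cmod|auto]).
  assert (Hwim : Rabs (Im w) < rho / 2) by (eapply Rle_lt_trans; [apply Im_le_Cmod|auto]).
  apply Rabs_lt_between in Hwre, Hwim.
  destruct (Hf (Re w) (Im w) ltac:(apply Rabs_le; lra) ltac:(apply Rabs_le; lra)) as [l Hl].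
  replace (Re w, Im w) with w in Hl by (destruct w; reflexivity).
  set (g := difference_quotient f w l).
  assert (Hg0 : square_integral g rho = RtoC 0).
  { apply (goursat_except_point g _ _ _ _ w); try lra.
    - intros x y Hx Hy. destruct (Ceq_dec (x, y) w) as [E|E].
      + rewrite E. apply difference_quotient_continuous; auto.
      + apply ex_Cderive_continuous, difference_quotient_derive; auto. apply Hf; apply Rabs_le; lra.
    - intros x y Hx Hy Hne. apply difference_quotient_derive; auto. apply Hf; apply Rabs_le; lra. }
  assert (E : square_integral g rho = square_integral
            (fun z => f z / (z ^ 0 * (z - w)) - f w * (RtoC 1 / (z ^ 0 * (z - w))))%C rho).
  { apply square_integral_ext; [lra|]. intros z Hz. destruct (square_boundary_ne rho z w Hr Hz Hw) as [N1 _].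
    unfold g, difference_quotient. destruct (Ceq_dec z w) as [E|]; [subst; exfalso; apply N1; ring|].
    simpl. field. auto. }
  assert (Hone : holomorphic_on_square (fun _ => RtoC 1) rho) by (intros x y _ _; apply ex_Cderive_const).
  unfold square_integral in E, Hg0. rewrite E, rect_integral_minus, rect_integral_scal in Hg0; try lra.
  - symmetry. apply Cminus_eq_0. exact Hg0.
  - apply (cauchy_integrand_continuous (fun _ => RtoC 1)); auto.
  - apply cauchy_integrand_continuous; auto.
  - apply continuous_on_boundary_scal, (cauchy_integrand_continuous (fun _ => RtoC 1)); auto.
Qed.

Lemma RInt_ge_const (h : R -> R) a b c : a <= b -> ex_RInt h a b ->
  (forall t, a <= t <= b -> c <= h t) -> (b - a) * c <= RInt h a b.
Proof.
  intros Hab He H. rewrite <- (RInt_const (V:=R_CompleteNormedModule)).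
  apply RInt_le; auto. apply (ex_RInt_const (V:=R_CompleteNormedModule)). intros; apply H; lra.
Qed.

Lemma Im_rect_integral h x0 x1 y0 y1 : Im (rect_integral h x0 x1 y0 y1) =
  RInt (fun x => Im (h (x, y0))) x0 x1 + RInt (fun y => Re (h (x1, y))) y0 y1
  - RInt (fun x => Im (h (x, y1))) x0 x1 - RInt (fun y => Re (h (x0, y))) y0 y1.
Proof. unfold rect_integral, CRInt, Cminus, Cplus, Copp, Cmult, Ci, Im, Re. simpl. ring. Qed.

Lemma Cinv_components (x y : R) : x ^ 2 + y ^ 2 <> 0 ->
  (RtoC 1 / ((x, y) ^ 0 * ((x, y) - RtoC 0)))%C = (x / (x ^ 2 + y ^ 2), - y / (x ^ 2 + y ^ 2)).
Proof.
  intros Hn. unfold Cdiv, Cmult, Cinv, Cminus, Cplus, Copp, RtoC; simpl.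
  apply injective_projections; simpl; field; replace (x * x + y * y) with (x ^ 2 + y ^ 2) by ring; auto.
Qed.

Lemma RInt_square_edge_ge_1 (rho : R) (h : R -> R) : 0 < rho -> ex_RInt h (-rho) rho ->
  (forall t, -rho <= t <= rho -> h t = rho / (t ^ 2 + rho ^ 2)) -> 1 <= RInt h (-rho) rho.
Proof.
  intros Hr Hex Hh. replace 1 with ((rho - - rho) * (1 / (2 * rho))) by (field; lra).
  apply RInt_ge_const; auto; [lra|]. intros t Ht. rewrite Hh by auto.
  replace (1 / (2 * rho)) with (rho / (2 * rho ^ 2)) by (field; lra).
  unfold Rdiv. apply Rmult_le_compat_l; [lra|]. apply Rinv_le_contravar; nra.
Qed.

(** Each of the four edges contributes at least [1] to [Im ∮ dz / z]. *)
Lemma cauchy_moment_one_ne0 rho : 0 < rho -> cauchy_moment (fun _ => RtoC 1) rho 0 (RtoC 0) <> RtoC 0.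
Proof.
  intros Hr.
  assert (Hf : holomorphic_on_square (fun _ => RtoC 1) rho) by (intros x y _ _; apply ex_Cderive_const).
  assert (Hw : Cmod (RtoC 0) < rho / 2) by (rewrite Cmod_0; lra).
  destruct (cauchy_integrand_continuous _ rho 0 _ Hr Hf Hw) as [E1 E2].
  set (g := fun z : C => (RtoC 1 / (z ^ 0 * (z - RtoC 0)))%C) in E1, E2.
  assert (Hg : forall t, -rho <= t <= rho ->
            g (t, -rho) = (t / (t ^ 2 + rho ^ 2), rho / (t ^ 2 + rho ^ 2)) /\
            g (t, rho) = (t / (t ^ 2 + rho ^ 2), - rho / (t ^ 2 + rho ^ 2)) /\
            g (-rho, t) = (- rho / (t ^ 2 + rho ^ 2), - t / (t ^ 2 + rho ^ 2)) /\
            g (rho, t) = (rho / (t ^ 2 + rho ^ 2), - t / (t ^ 2 + rho ^ 2))).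
  { intros t Ht. unfold g. rewrite !Cinv_components by nra.
    repeat split; f_equal; f_equal; ring. }
  assert (Hex : forall y, y = -rho \/ y = rho -> ex_RInt (fun x => Im (g (x, y))) (-rho) rho)
    by (intros y Ey; apply ex_RInt_Im; [lra|]; apply horizontal_continuous_on;
        intros t Ht; destruct (E1 t Ht); destruct Ey; subst; auto).
  assert (Hex' : forall x, x = -rho \/ x = rho -> ex_RInt (fun y => Re (g (x, y))) (-rho) rho)
    by (intros x Ex; apply ex_RInt_Re; [lra|]; apply vertical_continuous_on;
        intros t Ht; destruct (E2 t Ht); destruct Ex; subst; auto).
  assert (A1 : 1 <= RInt (fun x => Im (g (x, - rho))) (- rho) rho).
  { apply RInt_square_edge_ge_1; auto. intros t Ht. destruct (Hg t Ht) as (-> & _). reflexivity. }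
  assert (A2 : 1 <= RInt (fun y => Re (g (rho, y))) (- rho) rho).
  { apply RInt_square_edge_ge_1; auto. intros t Ht. destruct (Hg t Ht) as (_ & _ & _ & ->). reflexivity. }
  assert (A3 : 1 <= - RInt (fun x => Im (g (x, rho))) (- rho) rho).
  { rewrite <- (RInt_opp (V:=R_CompleteNormedModule)) by auto.
    apply RInt_square_edge_ge_1; [auto | apply (ex_RInt_opp (V:=R_CompleteNormedModule)); auto|].
    intros t Ht. destruct (Hg t Ht) as (_ & -> & _). unfold opp; simpl. field. nra. }
  assert (A4 : 1 <= - RInt (fun y => Re (g (- rho, y))) (- rho) rho).
  { rewrite <- (RInt_opp (V:=R_CompleteNormedModule)) by auto.
    apply RInt_square_edge_ge_1; [auto | apply (ex_RInt_opp (V:=R_CompleteNormedModule)); auto|].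
    intros t Ht. destruct (Hg t Ht) as (_ & _ & -> & _). unfold opp; simpl. field. nra. }
  intro E. apply (f_equal Im) in E. unfold cauchy_moment, square_integral in E.
  rewrite Im_rect_integral in E. change (Im (RtoC 0)) with 0 in E. unfold g in A1, A2, A3, A4. lra.
Qed.

(** * Vanishing order of holomorphic functions *)

Definition locally_zero (f : C -> C) : Prop :=
  exists eta, 0 < eta /\ forall w, Cmod w < eta -> f w = RtoC 0.

Definition has_leading_term (f : C -> C) (k : nat) (phi : C) : Prop :=
  phi <> RtoC 0 /\ exists Cc eta, 0 < eta /\
    forall w, Cmod w < eta -> Cmod (f w - phi * w ^ k) <= Cc * Cmod w ^ S k.

Section SquareCauchyKernel.

Variable rho : R.
Hypothesis rho_pos : 0 < rho.

Let K := cauchy_moment (fun _ => RtoC 1) rho.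
Let k0 := K 0%nat (RtoC 0).

Definition kernel_radius : R := Rmin (rho / 2) (Cmod k0 * rho / 64).

Lemma kernel_radius_spec : 0 < kernel_radius /\ kernel_radius <= rho / 2 /\
  forall w, Cmod w < kernel_radius ->
    K 0%nat w = (k0 + w * K 1%nat w)%C /\ Cmod (K 1%nat w) <= 32 / rho /\ Cmod k0 / 2 <= Cmod (K 0%nat w).
Proof.
  assert (Hk0 : 0 < Cmod k0) by (apply Cmod_gt_0, cauchy_moment_one_ne0; auto).
  assert (Hone : holomorphic_on_square (fun _ => RtoC 1) rho) by (intros x y _ _; apply ex_Cderive_const).
  assert (Hrad : 0 < kernel_radius /\ kernel_radius <= rho / 2 /\ kernel_radius <= Cmod k0 * rho / 64).
  { unfold kernel_radius, Rmin. destruct Rle_dec; repeat split; try lra.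
    apply Rdiv_lt_0_compat; [apply Rmult_lt_0_compat|]; lra. }
  destruct Hrad as (R1 & R2 & R3). split; [|split]; auto. intros w Hw.
  assert (E : K 0%nat w = (k0 + w * K 1%nat w)%C) by (apply cauchy_moment_succ; auto; lra).
  assert (B : Cmod (K 1%nat w) <= 32 / rho).
  { replace (32 / rho) with (32 * 1 / rho ^ 1) by (simpl; field; lra).
    apply cauchy_moment_norm; auto; try lra. intros; rewrite Cmod_1; lra. }
  split; [|split]; auto.
  rewrite E. pose proof (Cmod_le_sub_plus k0 (- (w * K 1%nat w))%C) as H.
  replace (k0 - - (w * K 1%nat w))%C with (k0 + w * K 1%nat w)%C in H by ring.
  rewrite Cmod_opp, Cmod_mult in H.
  assert (Cmod w * Cmod (K 1%nat w) <= Cmod w * (32 / rho))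
    by (apply Rmult_le_compat_l; auto using Cmod_ge_0).
  assert (Cmod w * (32 / rho) <= Cmod k0 / 2).
  { apply Rle_trans with (Cmod k0 * rho / 64 * (32 / rho)); [|right; field; lra].
    apply Rmult_le_compat_r; [apply Rdiv_le_0_compat|]; lra. }
  lra.
Qed.

Variable f : C -> C.
Hypothesis f_holo : holomorphic_on_square f rho.

Lemma moments_zero_locally_zero :
  (forall n, cauchy_moment f rho n (RtoC 0) = RtoC 0) ->
  forall w, Cmod w < kernel_radius -> f w = RtoC 0.
Proof.
  intros Hall w Hw. destruct kernel_radius_spec as (Hr1 & Hr2 & HK).
  destruct (HK w Hw) as (_ & _ & HKw).
  destruct (square_boundary_bounded f rho rho_pos f_holo) as [M [HM0 HM]].
  assert (Hk0 : 0 < Cmod k0) by (apply Cmod_gt_0, cauchy_moment_one_ne0; auto).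
  apply Cmod_eq_0. apply Rle_antisym; [|apply Cmod_ge_0].
  set (x := Cmod w / rho).
  assert (Hx : 0 <= x < 1).
  { unfold x. split; [apply Rdiv_le_0_compat; auto using Cmod_ge_0|].
    apply Rmult_lt_reg_r with rho; auto. unfold Rdiv. rewrite Rmult_assoc, Rinv_l by lra. lra. }
  (* [|f w| |k0| / 2 <= 32 M x^N] for every [N], and [x^N -> 0]. *)
  assert (Hbound : forall N, Cmod (f w) * (Cmod k0 / 2) <= 32 * M * x ^ N).
  { intros N.
    assert (It : cauchy_moment f rho 0 w = (w ^ N * cauchy_moment f rho N w)%C)
      by (apply cauchy_moment_expansion; auto; lra).
    assert (Bd : Cmod (cauchy_moment f rho N w) <= 32 * M / rho ^ N)
      by (apply cauchy_moment_norm; auto; lra).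
    apply Rle_trans with (Cmod (f w) * Cmod (K 0%nat w)); [apply Rmult_le_compat_l; auto using Cmod_ge_0|].
    rewrite <- Cmod_mult. unfold K. rewrite cauchy_integral_formula, It, Cmod_mult, Cmod_pow by (auto; lra).
    unfold x, Rdiv. rewrite Rpow_mult_distr, pow_inv.
    assert (0 < rho ^ N) by (apply pow_lt; auto).
    apply Rle_trans with (Cmod w ^ N * (32 * M / rho ^ N)); [|right; field; lra].
    apply Rmult_le_compat_l; auto. apply pow_le, Cmod_ge_0. }
  apply Rmult_le_reg_r with (Cmod k0 / 2); [lra|]. rewrite Rmult_0_l.
  apply (le_0_of_le_eps _ (32 * M + 1)). intros eps He.
  destruct (pow_lt_1_zero x ltac:(rewrite Rabs_pos_eq; lra) eps He) as [N HN].
  specialize (HN N (Nat.le_refl N)). rewrite Rabs_pos_eq in HN by (apply pow_le; lra).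
  eapply Rle_trans; [apply (Hbound N)|]. nra.
Qed.

Lemma moment_factorization k w :
  (forall n, (n < k)%nat -> cauchy_moment f rho n (RtoC 0) = RtoC 0) -> Cmod w < kernel_radius ->
  (f w * K 0%nat w)%C = (w ^ k * (cauchy_moment f rho k (RtoC 0) + w * cauchy_moment f rho (S k) w))%C.
Proof.
  intros Hmin Hw. destruct kernel_radius_spec as (_ & Hr2 & _). unfold K.
  rewrite cauchy_integral_formula, (cauchy_moment_expansion f rho k), (cauchy_moment_succ f rho k)
    by (auto; lra).
  reflexivity.
Qed.

Lemma first_nonzero_moment_leading_term k :
  cauchy_moment f rho k (RtoC 0) <> RtoC 0 ->
  (forall n, (n < k)%nat -> cauchy_moment f rho n (RtoC 0) = RtoC 0) ->
  has_leading_term f k (cauchy_moment f rho k (RtoC 0) / k0)%C.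
Proof.
  intros Hk Hmin. destruct kernel_radius_spec as (Hr1 & Hr2 & HK).
  destruct (square_boundary_bounded f rho rho_pos f_holo) as [M [HM0 HM]].
  assert (Hk0 : 0 < Cmod k0) by (apply Cmod_gt_0, cauchy_moment_one_ne0; auto).
  assert (Hk0' : k0 <> RtoC 0) by (apply Cmod_gt_0; auto).
  set (c := cauchy_moment f rho k (RtoC 0)) in *.
  set (B := 2 * (32 * M / rho ^ (S k) * Cmod k0 + Cmod c * (32 / rho)) / (Cmod k0 * Cmod k0)).
  split.
  { intro E. apply Hk. apply (f_equal (fun u => u * k0)%C) in E.
    replace (c / k0 * k0)%C with c in E by (field; auto). rewrite E. ring. }
  exists B, kernel_radius. split; auto. intros w Hw.
  destruct (HK w Hw) as [EK [BK HKw]].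
  assert (HKnz : K 0%nat w <> RtoC 0) by (apply Cmod_gt_0; lra).
  pose proof (moment_factorization k w Hmin Hw) as Hfac.
  fold c in Hfac. set (t := cauchy_moment f rho (S k) w) in Hfac.
  assert (Bt : Cmod t <= 32 * M / rho ^ (S k)) by (apply cauchy_moment_norm; auto; lra).
  set (K0 := K 0%nat w) in *. set (k1 := K 1%nat w) in *.
  (* [K0 = k0 + w k1], so the error term carries a factor [w ^ S k]. *)
  assert (Eq : (f w - c / k0 * w ^ k)%C = (w ^ (S k) * (t * k0 - c * k1) / (K0 * k0))%C).
  { assert (Ef : f w = (w ^ k * (c + w * t) / K0)%C) by (rewrite <- Hfac; field; auto).
    rewrite Ef. simpl. rewrite EK. field. split; auto. rewrite <- EK. auto. }
  rewrite Eq, Cmod_div, !Cmod_mult, Cmod_pow by (apply Cmult_neq_0; auto).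
  assert (Hn : Cmod (t * k0 - c * k1) <= 32 * M / rho ^ (S k) * Cmod k0 + Cmod c * (32 / rho)).
  { replace (t * k0 - c * k1)%C with (t * k0 + - (c * k1))%C by ring.
    eapply Rle_trans; [apply Cmod_triangle|]. rewrite Cmod_opp, !Cmod_mult.
    apply Rplus_le_compat; apply Rmult_le_compat; auto using Cmod_ge_0; lra. }
  pose proof (pow_le (Cmod w) (S k) (Cmod_ge_0 w)).
  apply Rle_trans with (Cmod w ^ S k * (32 * M / rho ^ (S k) * Cmod k0 + Cmod c * (32 / rho))
                        / (Cmod k0 / 2 * Cmod k0)).
  - unfold Rdiv. apply Rmult_le_compat.
    + apply Rmult_le_pos; auto using Cmod_ge_0.
    + left; apply Rinv_0_lt_compat; apply Rmult_lt_0_compat; lra.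
    + apply Rmult_le_compat_l; auto.
    + apply Rinv_le_contravar; [apply Rmult_lt_0_compat; lra|]. apply Rmult_le_compat_r; lra.
  - assert (0 < rho ^ S k) by (apply pow_lt; lra). right. unfold B. field. lra.
Qed.

End SquareCauchyKernel.

Theorem holomorphic_zero_or_leading_term f r : 0 < r -> (forall z, Cmod z < r -> ex_Cderive f z) ->
  locally_zero f \/ exists k phi, has_leading_term f k phi.
Proof.
  intros Hr Hf. set (rho := r / 3).
  assert (Hrho : 0 < rho) by (unfold rho; lra).
  assert (HSq : holomorphic_on_square f rho).
  { intros x y Hx Hy. apply Hf. eapply Rle_lt_trans; [apply Cmod_le_Re_Im|].
    unfold Re, Im; simpl. unfold rho in *. lra. }
  destruct (classic (forall n, cauchy_moment f rho n (RtoC 0) = RtoC 0)) as [Hall|Hex].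
  - left. exists (kernel_radius rho). split; [apply kernel_radius_spec; auto|].
    apply moments_zero_locally_zero; auto.
  - right. apply not_all_ex_not in Hex.
    destruct (dec_inh_nat_subset_has_unique_least_element _ (fun n => classic _) Hex)
      as [k [[Hk Hmin] _]].
    eexists k, _. apply (first_nonzero_moment_leading_term rho); auto.
    intros n Hn. apply NNPP. intro Hne. specialize (Hmin n Hne). lia.
Qed.

(** * Ratios of functions near the origin *)

Definition ratio_converges (a b : C -> C) : Prop :=
  exists L : C, forall eps, 0 < eps -> exists eta, 0 < eta /\
    forall w, Cmod w < eta -> Cmod (b w - L * a w) <= eps * Cmod (a w).

Definition ratio_diverges (a b : C -> C) : Prop :=
  forall eps, 0 < eps -> exists eta, 0 < eta /\
    forall w, Cmod w < eta -> Cmod (a w) <= eps * Cmod (b w).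

Lemma leading_term_bounds f k phi : has_leading_term f k phi ->
  exists A eta, 0 < eta /\ forall w, Cmod w < eta ->
    Cmod phi / 2 * Cmod w ^ k <= Cmod (f w) /\ Cmod (f w) <= A * Cmod w ^ k /\
    Cmod (f w - phi * w ^ k) <= A * Cmod w ^ S k.
Proof.
  intros [Hphi [Cc [eta [Heta H]]]]. assert (Hp : 0 < Cmod phi) by (apply Cmod_gt_0; auto).
  set (e := Rmin (Rmin eta 1) (Cmod phi / (2 * (Rabs Cc + 1)))).
  assert (HC : 0 <= Rabs Cc) by apply Rabs_pos.
  assert (He : 0 < e /\ e <= eta /\ e <= 1 /\ e <= Cmod phi / (2 * (Rabs Cc + 1))).
  { assert (0 < Cmod phi / (2 * (Rabs Cc + 1))) by (apply Rdiv_lt_0_compat; lra).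
    unfold e, Rmin; repeat destruct Rle_dec; lra. }
  exists (Cmod phi + Rabs Cc), e. split; [lra|]. intros w Hw.
  specialize (H w ltac:(lra)). simpl in H.
  pose proof (Cmod_ge_0 w). assert (Hpk : 0 <= Cmod w ^ k) by (apply pow_le; lra).
  assert (Hrem : Cc * (Cmod w * Cmod w ^ k) <= Rabs Cc * Cmod w * Cmod w ^ k).
  { rewrite Rmult_assoc. apply Rmult_le_compat_r; [apply Rmult_le_pos; lra | apply Rle_abs]. }
  assert (Hsmall : Rabs Cc * Cmod w <= Cmod phi / 2).
  { apply Rle_trans with ((Rabs Cc + 1) * (Cmod phi / (2 * (Rabs Cc + 1)))); [|right; field; lra].
    apply Rmult_le_compat; lra. }
  assert (Hpw : Cmod (phi * w ^ k)%C = Cmod phi * Cmod w ^ k) by (rewrite Cmod_mult, Cmod_pow; auto).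
  pose proof (Cmod_le_sub_plus (phi * w ^ k)%C (f w)) as H1. rewrite Cmod_sub_sym in H1.
  pose proof (Cmod_le_sub_plus (f w) (phi * w ^ k)%C).
  assert (Rabs Cc * Cmod w * Cmod w ^ k <= Cmod phi / 2 * Cmod w ^ k) by (apply Rmult_le_compat_r; auto).
  assert (Rabs Cc * Cmod w * Cmod w ^ k <= Rabs Cc * Cmod w ^ k).
  { rewrite Rmult_assoc. apply Rmult_le_compat_l; auto. rewrite <- (Rmult_1_l (Cmod w ^ k)) at 2.
    apply Rmult_le_compat_r; lra. }
  assert (Cmod phi * Cmod w * Cmod w ^ k >= 0) by (apply Rle_ge, Rmult_le_pos; [apply Rmult_le_pos|]; lra).
  simpl. repeat split; lra.
Qed.

Lemma negligible_of_higher_order (f g : C -> C) k m c A eta : 0 < c -> (k < m)%nat -> 0 < eta ->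
  (forall w, Cmod w < eta -> c * Cmod w ^ k <= Cmod (f w) /\ Cmod (g w) <= A * Cmod w ^ m) ->
  forall eps, 0 < eps -> exists eta', 0 < eta' /\ forall w, Cmod w < eta' -> Cmod (g w) <= eps * Cmod (f w).
Proof.
  intros Hc Hkm Heta H eps He.
  set (A' := Rabs A + 1).
  set (e := Rmin (Rmin eta 1) (eps * c / A')).
  assert (HA' : 0 < A') by (unfold A'; pose proof (Rabs_pos A); lra).
  assert (He' : 0 < e /\ e <= eta /\ e <= 1 /\ e <= eps * c / A').
  { assert (0 < eps * c / A') by (apply Rdiv_lt_0_compat; [apply Rmult_lt_0_compat|]; lra).
    unfold e, Rmin; repeat destruct Rle_dec; lra. }
  exists e. split; [lra|]. intros w Hw. destruct (H w ltac:(lra)) as [Hf Hg].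
  pose proof (Cmod_ge_0 w). assert (Hk : 0 <= Cmod w ^ k) by (apply pow_le; lra).
  assert (Hmk : Cmod w ^ m <= Cmod w * Cmod w ^ k).
  { replace m with (S k + (m - S k))%nat by lia. rewrite pow_add. simpl.
    rewrite <- (Rmult_1_r (Cmod w * Cmod w ^ k)) at 2. apply Rmult_le_compat_l; [nra|].
    rewrite <- (pow1 (m - S k)). apply pow_incr; lra. }
  assert (Hw' : A' * Cmod w <= eps * c).
  { apply Rle_trans with (A' * (eps * c / A')); [apply Rmult_le_compat_l; lra | right; field; lra]. }
  apply Rle_trans with (A' * (Cmod w * Cmod w ^ k)).
  - eapply Rle_trans; [exact Hg|]. apply Rle_trans with (A' * Cmod w ^ m).
    + apply Rmult_le_compat_r; [apply pow_le; lra|]. unfold A'. pose proof (Rle_abs A). lra.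
    + apply Rmult_le_compat_l; lra.
  - apply Rle_trans with (eps * (c * Cmod w ^ k)); [|apply Rmult_le_compat_l; lra].
    rewrite <- Rmult_assoc. replace (eps * (c * Cmod w ^ k)) with (eps * c * Cmod w ^ k) by ring.
    apply Rmult_le_compat_r; auto.
Qed.

Lemma holomorphic_ratio_dichotomy a b r : 0 < r ->
  (forall z, Cmod z < r -> ex_Cderive a z) -> (forall z, Cmod z < r -> ex_Cderive b z) ->
  ratio_converges a b \/ ratio_diverges a b.
Proof.
  intros Hr Ha Hb.
  destruct (holomorphic_zero_or_leading_term a r Hr Ha) as [[ea [Hea Ha0]] | [ka [pa Hla]]].
  { right. intros eps He. exists ea. split; auto. intros w Hw. rewrite Ha0, Cmod_0 by auto.
    apply Rmult_le_pos; [lra|apply Cmod_ge_0]. }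
  destruct (holomorphic_zero_or_leading_term b r Hr Hb) as [[eb [Heb Hb0]] | [kb [pb Hlb]]].
  { left. exists (RtoC 0). intros eps He. exists eb. split; auto. intros w Hw. rewrite Hb0 by auto.
    replace (RtoC 0 - RtoC 0 * a w)%C with (RtoC 0) by ring. rewrite Cmod_0.
    apply Rmult_le_pos; [lra|apply Cmod_ge_0]. }
  destruct (leading_term_bounds a ka pa Hla) as [Aa [ea [Hea HBa]]].
  destruct (leading_term_bounds b kb pb Hlb) as [Ab [eb [Heb HBb]]].
  assert (Hpa : 0 < Cmod pa / 2) by (assert (0 < Cmod pa) by (apply Cmod_gt_0, Hla); lra).
  assert (Hpb : 0 < Cmod pb / 2) by (assert (0 < Cmod pb) by (apply Cmod_gt_0, Hlb); lra).
  set (e := Rmin ea eb). assert (He : 0 < e /\ e <= ea /\ e <= eb) by (unfold e, Rmin; destruct Rle_dec; lra).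
  destruct (Compare_dec.lt_eq_lt_dec ka kb) as [[Hlt|Heq]|Hgt].
  - left. exists (RtoC 0). intros eps Heps.
    destruct (negligible_of_higher_order a b ka kb (Cmod pa / 2) Ab e) with (eps := eps)
      as [eta [Heta Hw]]; auto; try lra.
    { intros w Hw. split; [apply HBa | apply HBb]; lra. }
    exists eta. split; auto. intros w Hw'. replace (b w - RtoC 0 * a w)%C with (b w) by ring. auto.
  - subst kb. left. exists (pb / pa)%C. intros eps Heps.
    destruct (negligible_of_higher_order a (fun w => b w - pb / pa * a w)%C ka (S ka) (Cmod pa / 2)
                (Ab + Cmod (pb / pa) * Aa) e) with (eps := eps) as [eta [Heta Hw]]; auto; try lra.
    2: { exists eta; auto. }
    intros w Hw. split; [apply HBa; lra|].
    assert (Hpa0 : pa <> RtoC 0) by apply Hla.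
    destruct (HBa w ltac:(lra)) as (_ & _ & HY). destruct (HBb w ltac:(lra)) as (_ & _ & HX).
    set (X := (b w - pb * w ^ ka)%C) in HX. set (Y := (a w - pa * w ^ ka)%C) in HY.
    replace (b w - pb / pa * a w)%C with (X + - (pb / pa * Y))%C by (unfold X, Y; field; auto).
    eapply Rle_trans; [apply Cmod_triangle|]. rewrite Cmod_opp, Cmod_mult.
    assert (Cmod (pb / pa) * Cmod Y <= Cmod (pb / pa) * (Aa * Cmod w ^ S ka))
      by (apply Rmult_le_compat_l; auto using Cmod_ge_0).
    lra.
  - right. intros eps Heps.
    destruct (negligible_of_higher_order b a kb ka (Cmod pb / 2) Aa e) with (eps := eps)
      as [eta [Heta Hw]]; auto; try lra.
    { intros w Hw. split; [apply HBb | apply HBa]; lra. }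
    exists eta. split; auto.
Qed.

Lemma R_cauchy_limit (v : nat -> R) (e : nat -> R) :
  (forall n m, (n <= m)%nat -> Rabs (v n - v m) <= e n) ->
  (forall n m, (n <= m)%nat -> e m <= e n) ->
  (forall eps, 0 < eps -> exists N, e N < eps) ->
  exists l, forall n, Rabs (v n - l) <= e n.
Proof.
  intros Hv He Hlim.
  assert (Hc : Cauchy_crit v).
  { intros eps Heps. destruct (Hlim eps Heps) as [N HN]. exists N. intros n m Hn Hm. unfold Rdist.
    destruct (Nat.le_ge_cases n m) as [Hnm|Hnm].
    - specialize (Hv n m Hnm). specialize (He N n Hn). lra.
    - rewrite Rabs_minus_sym. specialize (Hv m n Hnm). specialize (He N m Hm). lra. }
  destruct (Rcomplete.R_complete v Hc) as [l Hl]. exists l. intros n.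
  destruct (Rle_or_lt (Rabs (v n - l)) (e n)) as [|Hgt]; auto. exfalso.
  destruct (Hl (Rabs (v n - l) - e n)) as [N HN]; [lra|].
  specialize (HN (Nat.max n N) ltac:(lia)). specialize (Hv n (Nat.max n N) ltac:(lia)).
  unfold Rdist in HN. pose proof (Rabs_triang (v n - v (Nat.max n N)) (v (Nat.max n N) - l)).
  replace (v n - v (Nat.max n N) + (v (Nat.max n N) - l)) with (v n - l) in H by ring. lra.
Qed.

Lemma C_cauchy_limit (u : nat -> C) (e : nat -> R) :
  (forall n m, (n <= m)%nat -> Cmod (u n - u m) <= e n) ->
  (forall n m, (n <= m)%nat -> e m <= e n) ->
  (forall eps, 0 < eps -> exists N, e N < eps) ->
  exists L, forall n, Cmod (u n - L) <= 2 * e n.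
Proof.
  intros Hu He Hlim.
  destruct (R_cauchy_limit (fun n => Re (u n)) e) as [lr Hlr]; auto.
  { intros n m Hnm. eapply Rle_trans; [|apply (Hu n m Hnm)].
    replace (Re (u n) - Re (u m)) with (Re (u n - u m)%C) by (unfold Re; simpl; ring). apply re_le_Cmod. }
  destruct (R_cauchy_limit (fun n => Im (u n)) e) as [li Hli]; auto.
  { intros n m Hnm. eapply Rle_trans; [|apply (Hu n m Hnm)].
    replace (Im (u n) - Im (u m)) with (Im (u n - u m)%C) by (unfold Im; simpl; ring). apply Im_le_Cmod. }
  exists (lr, li). intros n. eapply Rle_trans; [apply Cmod_le_Re_Im|].
  replace (Re (u n - (lr, li))%C) with (Re (u n) - lr) by (unfold Re; simpl; ring).
  replace (Im (u n - (lr, li))%C) with (Im (u n) - li) by (unfold Im; simpl; ring).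
  specialize (Hlr n). specialize (Hli n). lra.
Qed.

Lemma not_locally_zero_witness a eta : ~ locally_zero a -> 0 < eta ->
  exists w, Cmod w < eta /\ a w <> RtoC 0.
Proof.
  intros Hnz Heta. apply NNPP. intro Hno. apply Hnz. exists eta. split; auto.
  intros w Hw. apply NNPP. intro Haw. apply Hno. exists w. auto.
Qed.

Lemma approximate_ratios_close (a b : C -> C) (M M' : C) (r r' eta eta' : R) :
  ~ locally_zero a -> 0 < eta -> 0 < eta' ->
  (forall w, Cmod w < eta -> Cmod (b w - M * a w) <= r * Cmod (a w)) ->
  (forall w, Cmod w < eta' -> Cmod (b w - M' * a w) <= r' * Cmod (a w)) ->
  Cmod (M - M') <= r + r'.
Proof.
  intros Hnz He He' H1 H2.
  destruct (not_locally_zero_witness a (Rmin eta eta') Hnz) as [w [Hw Haw]]; [apply Rmin_pos; auto|].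
  specialize (H1 w (Rlt_le_trans _ _ _ Hw (Rmin_l _ _))).
  specialize (H2 w (Rlt_le_trans _ _ _ Hw (Rmin_r _ _))).
  assert (Hap : 0 < Cmod (a w)) by (apply Cmod_gt_0; auto).
  pose proof (Cmod_sub_le (M * a w)%C (b w) (M' * a w)%C) as H.
  rewrite (Cmod_sub_sym (M * a w)%C (b w)) in H.
  replace (M * a w - M' * a w)%C with ((M - M') * a w)%C in H by ring. rewrite Cmod_mult in H.
  apply Rmult_le_reg_r with (Cmod (a w)); lra.
Qed.

Lemma inv_succ_small (h1 eps : R) : 0 < eps -> exists N, h1 / (INR N + 1) < eps.
Proof.
  intros Heps. destruct (INR_unbounded (Rabs h1 / eps)) as [N HN]. exists N. pose proof (pos_INR N).
  apply Rle_lt_trans with (Rabs h1 / (INR N + 1)).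
  { unfold Rdiv. apply Rmult_le_compat_r; [left; apply Rinv_0_lt_compat; lra | apply Rle_abs]. }
  apply Rmult_lt_reg_r with (INR N + 1); [lra|]. unfold Rdiv at 1. rewrite Rmult_assoc, Rinv_l by lra.
  apply Rmult_lt_reg_l with (/ eps); [apply Rinv_0_lt_compat; lra|].
  replace (/ eps * (Rabs h1 * 1)) with (Rabs h1 / eps) by (unfold Rdiv; ring).
  replace (/ eps * (eps * (INR N + 1))) with (INR N + 1) by (field; lra). lra.
Qed.

Lemma inv_succ_decreasing (h1 : R) : 0 < h1 ->
  (forall n, 0 < h1 / (INR n + 1) <= h1) /\
  (forall n m, (n <= m)%nat -> h1 / (INR m + 1) <= h1 / (INR n + 1)).
Proof.
  intros Hh1. split.
  - intros n. pose proof (pos_INR n). split; [apply Rdiv_lt_0_compat; lra|].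
    apply Rmult_le_reg_r with (INR n + 1); [lra|]. unfold Rdiv. rewrite Rmult_assoc, Rinv_l by lra. nra.
  - intros n m Hnm. apply le_INR in Hnm. unfold Rdiv. apply Rmult_le_compat_l; [lra|].
    apply Rinv_le_contravar; pose proof (pos_INR n); lra.
Qed.

(** If [b / a] is within [h Q] of some [M_h] near [0], for arbitrarily small [h],
    then the [M_h] converge, and their limit is the limit of [b / a]. *)
Lemma ratio_converges_of_approximations (a b : C -> C) (Q h1 : R) :
  0 < h1 -> 0 <= Q -> ~ locally_zero a ->
  (forall h, 0 < h <= h1 -> exists M eta, 0 < eta /\
     forall w, Cmod w < eta -> Cmod (b w - M * a w) <= h * Q * Cmod (a w)) ->
  ratio_converges a b.
Proof.
  intros Hh1 HQ Hnz HM.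
  set (hn := fun n : nat => h1 / (INR n + 1)).
  destruct (inv_succ_decreasing h1 Hh1) as [Hhn Hmono].
  change (forall n, 0 < hn n <= h1) in Hhn. change (forall n m, (n <= m)%nat -> hn m <= hn n) in Hmono.
  destruct (functional_choice (fun n M => exists eta, 0 < eta /\
              forall w, Cmod w < eta -> Cmod (b w - M * a w) <= hn n * Q * Cmod (a w)))
    as [Mx HMx]; [intros n; apply HM, Hhn|].
  destruct (C_cauchy_limit Mx (fun n => 2 * Q * hn n)) as [L HL].
  { intros n m Hnm. destruct (HMx n) as [e1 [He1 H1]]. destruct (HMx m) as [e2 [He2 H2]].
    pose proof (approximate_ratios_close a b _ _ _ _ _ _ Hnz He1 He2 H1 H2).
    specialize (Hmono n m Hnm). nra. }
  { intros n m Hnm. specialize (Hmono n m Hnm). nra. }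
  { intros eps Heps. destruct (inv_succ_small h1 (eps / (2 * Q + 1))) as [N HN].
    { apply Rdiv_lt_0_compat; lra. }
    exists N. specialize (Hhn N). fold (hn N) in HN.
    apply Rle_lt_trans with ((2 * Q + 1) * hn N); [nra|].
    apply Rlt_le_trans with ((2 * Q + 1) * (eps / (2 * Q + 1))); [apply Rmult_lt_compat_l; lra|].
    right; field; lra. }
  exists L. intros eps He.
  destruct (inv_succ_small h1 (eps / (5 * Q + 1))) as [N HN]; [apply Rdiv_lt_0_compat; lra|].
  fold (hn N) in HN. destruct (HMx N) as [eN [HeN HwN]]. exists eN. split; auto. intros w Hw.
  specialize (HwN w Hw). specialize (HL N). specialize (Hhn N).
  pose proof (Cmod_sub_le (b w) (Mx N * a w)%C (L * a w)%C) as H.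
  replace (Mx N * a w - L * a w)%C with ((Mx N - L) * a w)%C in H by ring. rewrite Cmod_mult in H.
  pose proof (Cmod_ge_0 (a w)).
  assert (Cmod (Mx N - L) * Cmod (a w) <= 2 * (2 * Q * hn N) * Cmod (a w))
    by (apply Rmult_le_compat_r; auto).
  assert ((5 * Q + 1) * hn N <= eps).
  { left. apply Rlt_le_trans with ((5 * Q + 1) * (eps / (5 * Q + 1))); [apply Rmult_lt_compat_l; lra|].
    right; field; lra. }
  assert ((5 * Q + 1) * hn N * Cmod (a w) <= eps * Cmod (a w)) by (apply Rmult_le_compat_r; auto).
  nra.
Qed.

Section RatioOfApproximations.

Variables (a b : C -> C) (d : R -> C -> C) (C0 h0 eta0 : R).
Hypotheses (C0_nonneg : 0 <= C0) (h0_pos : 0 < h0) (eta0_pos : 0 < eta0).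
Hypothesis approx : forall h, 0 < h < h0 -> forall w, Cmod w < eta0 ->
  Cmod (d h w - RtoC h * b w) <= C0 * (h * h) * (Cmod (a w) + h * Cmod (b w)).

Definition approx_scale : R := Rmin (h0 / 2) (Rmin (1 / 2) (1 / (2 * (C0 + 1)))).

Lemma approx_scale_spec : 0 < approx_scale /\
  forall h, 0 < h <= approx_scale -> C0 * (h * h) <= 1 / 2 /\ h <= 1 /\ h < h0.
Proof.
  assert (0 < 1 / (2 * (C0 + 1))) by (apply Rdiv_lt_0_compat; lra).
  assert (Hsc : 0 < approx_scale /\ approx_scale <= h0 / 2 /\ approx_scale <= 1 / 2 /\
              approx_scale <= 1 / (2 * (C0 + 1))) by (unfold approx_scale, Rmin; repeat destruct Rle_dec; lra).
  split; [lra|]. intros h Hh. split; [|lra].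
  assert (C0 * h <= 1 / 2); [|nra].
  apply Rle_trans with ((C0 + 1) * (1 / (2 * (C0 + 1)))); [apply Rmult_le_compat; lra | right; field; lra].
Qed.

Lemma approx_error_small h w : 0 < h <= approx_scale -> Cmod w < eta0 ->
  Cmod (d h w - RtoC h * b w) <= Cmod (a w) / 2 + h * Cmod (b w) / 2.
Proof.
  intros Hh Hw. destruct approx_scale_spec as [_ Hs]. destruct (Hs h Hh) as (S1 & S2 & S3).
  eapply Rle_trans; [apply approx; auto; lra|].
  pose proof (Cmod_ge_0 (a w)). pose proof (Cmod_ge_0 (b w)).
  assert (0 <= C0 * (h * h)) by (apply Rmult_le_pos; nra).
  apply Rle_trans with (1 / 2 * (Cmod (a w) + h * Cmod (b w))); [apply Rmult_le_compat_r; nra | lra].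
Qed.

Lemma ratio_diverges_of_approx h : 0 < h <= approx_scale -> ratio_diverges a (d h) -> ratio_diverges a b.
Proof.
  intros Hh HII eps He. destruct approx_scale_spec as [_ Hs]. destruct (Hs h Hh) as (_ & S2 & _).
  set (m := Rmin 1 (eps / 4)).
  assert (Hm : 0 < m /\ m <= 1 /\ m <= eps / 4) by (unfold m, Rmin; destruct Rle_dec; lra).
  destruct (HII m) as [eta [Heta Hw]]; [lra|].
  exists (Rmin eta eta0). split; [apply Rmin_pos; auto|]. intros w Hw'.
  specialize (Hw w (Rlt_le_trans _ _ _ Hw' (Rmin_l _ _))).
  pose proof (approx_error_small h w Hh (Rlt_le_trans _ _ _ Hw' (Rmin_r _ _))) as Happ.
  pose proof (Cmod_le_sub_plus (d h w) (RtoC h * b w)%C) as H.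
  rewrite Cmod_mult, Cmod_R, Rabs_pos_eq in H by lra.
  pose proof (Cmod_ge_0 (a w)). pose proof (Cmod_ge_0 (b w)).
  assert (Hd : Cmod (d h w) <= Cmod (a w) / 2 + 2 * h * Cmod (b w)) by nra.
  (* [|a| <= m |d_h| <= m |a| / 2 + 2 m h |b|], and [m <= 1]. *)
  assert (Cmod (a w) <= m * (Cmod (a w) / 2 + 2 * h * Cmod (b w)))
    by (eapply Rle_trans; [exact Hw|]; apply Rmult_le_compat_l; lra).
  assert (4 * m * h * Cmod (b w) <= eps * Cmod (b w)) by (apply Rmult_le_compat_r; nra).
  nra.
Qed.

Lemma ratio_bounded_of_approx h : 0 < h <= approx_scale -> ratio_converges a (d h) ->
  exists K eta, 0 < K /\ 0 < eta /\ eta <= eta0 /\ forall w, Cmod w < eta -> Cmod (b w) <= K * Cmod (a w).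
Proof.
  intros Hh [L HL]. destruct (HL 1 Rlt_0_1) as [eta [Heta HK]].
  exists (2 * (Cmod L + 2) / h), (Rmin eta eta0).
  split; [apply Rdiv_lt_0_compat; pose proof (Cmod_ge_0 L); lra|].
  split; [apply Rmin_pos; auto|]. split; [apply Rmin_r|]. intros w Hw.
  specialize (HK w (Rlt_le_trans _ _ _ Hw (Rmin_l _ _))).
  pose proof (approx_error_small h w Hh (Rlt_le_trans _ _ _ Hw (Rmin_r _ _))) as Happ.
  pose proof (Cmod_sub_le (RtoC h * b w)%C (d h w) (L * a w)%C) as H.
  rewrite (Cmod_sub_sym (RtoC h * b w)%C (d h w)) in H.
  pose proof (Cmod_le_sub_plus (RtoC h * b w)%C (L * a w)%C) as H0.
  rewrite !Cmod_mult, Cmod_R, Rabs_pos_eq in H0 by lra.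
  assert (h * Cmod (b w) / 2 <= (Cmod L + 2) * Cmod (a w)) by (pose proof (Cmod_ge_0 (a w)); lra).
  apply Rmult_le_reg_l with (h / 2); [lra|].
  replace (h / 2 * (2 * (Cmod L + 2) / h * Cmod (a w))) with ((Cmod L + 2) * Cmod (a w)) by (field; lra).
  lra.
Qed.

Lemma approximate_ratio_of_approx K etaK h : 0 < K -> 0 < etaK -> etaK <= eta0 ->
  (forall w, Cmod w < etaK -> Cmod (b w) <= K * Cmod (a w)) ->
  0 < h <= approx_scale -> ratio_converges a (d h) ->
  exists M eta, 0 < eta /\
    forall w, Cmod w < eta -> Cmod (b w - M * a w) <= h * (1 + C0 + C0 * K) * Cmod (a w).
Proof.
  intros HK0 HetaK HetaK0 Kb Hh [L HL]. destruct approx_scale_spec as [_ Hs].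
  destruct (Hs h Hh) as (S1 & S2 & S3).
  destruct (HL (h * h)) as [eta [Heta Hw]]; [nra|].
  exists (L / RtoC h)%C, (Rmin eta etaK). split; [apply Rmin_pos; auto|]. intros w Hw'.
  specialize (Hw w (Rlt_le_trans _ _ _ Hw' (Rmin_l _ _))).
  specialize (Kb w (Rlt_le_trans _ _ _ Hw' (Rmin_r _ _))).
  specialize (approx h ltac:(lra) w ltac:(pose proof (Rmin_r eta etaK); lra)).
  assert (Hhnz : RtoC h <> RtoC 0) by (intro E; injection E; lra).
  replace (b w - L / RtoC h * a w)%C with ((RtoC h * b w - L * a w) / RtoC h)%C by (field; auto).
  rewrite Cmod_div, Cmod_R, Rabs_pos_eq by (auto; lra).
  pose proof (Cmod_sub_le (RtoC h * b w)%C (d h w) (L * a w)%C) as H.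
  rewrite (Cmod_sub_sym (RtoC h * b w)%C (d h w)) in H.
  pose proof (Cmod_ge_0 (a w)). pose proof (Cmod_ge_0 (b w)).
  assert (C0 * (h * h) * (Cmod (a w) + h * Cmod (b w)) <= C0 * (h * h) * (Cmod (a w) + K * Cmod (a w))).
  { apply Rmult_le_compat_l; [apply Rmult_le_pos; nra|].
    assert (h * Cmod (b w) <= Cmod (b w)) by nra. lra. }
  apply Rmult_le_reg_r with h; [lra|]. unfold Rdiv. rewrite Rmult_assoc, Rinv_l, Rmult_1_r by lra.
  nra.
Qed.

Hypothesis dichotomy : forall h, 0 < h < h0 -> ratio_converges a (d h) \/ ratio_diverges a (d h).

Theorem ratio_dichotomy_of_approx : ratio_converges a b \/ ratio_diverges a b.
Proof.
  destruct approx_scale_spec as [Hh1 Hs].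
  destruct (classic (exists h, 0 < h <= approx_scale /\ ratio_diverges a (d h))) as [[h [Hh HII]]|Hno].
  { right. apply (ratio_diverges_of_approx h); auto. }
  left.
  assert (HI : forall h, 0 < h <= approx_scale -> ratio_converges a (d h)).
  { intros h Hh. destruct (dichotomy h ltac:(destruct (Hs h Hh); lra)) as [|A]; auto.
    exfalso. apply Hno. exists h; auto. }
  destruct (ratio_bounded_of_approx (approx_scale / 2)) as [K [etaK [HK [HetaK [HetaK0 Kb]]]]];
    [lra | apply HI; lra|].
  destruct (classic (locally_zero a)) as [[ea [Hea Ha0]]|Hnz].
  - exists (RtoC 0). intros eps He. exists (Rmin ea etaK). split; [apply Rmin_pos; auto|].
    intros w Hw. rewrite Ha0, Cmod_0 by (eapply Rlt_le_trans; [exact Hw|apply Rmin_l]).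
    specialize (Kb w (Rlt_le_trans _ _ _ Hw (Rmin_r _ _))).
    rewrite Ha0, Cmod_0 in Kb by (eapply Rlt_le_trans; [exact Hw|apply Rmin_l]).
    replace (b w - RtoC 0 * RtoC 0)%C with (b w) by ring. lra.
  - apply (ratio_converges_of_approximations a b (1 + C0 + C0 * K) approx_scale); auto; [nra|].
    intros h Hh. apply (approximate_ratio_of_approx K etaK); auto.
Qed.

End RatioOfApproximations.

(** * The second-order equation in [z] *)

Lemma is_path_derive_minus_linear g t l (c : C) : is_path_derive g t l ->
  is_path_derive (fun s => g s - RtoC s * c)%C t (l - c)%C.
Proof.
  intros [A B].
  assert (Hid : forall k : R, is_derive (fun s => k * s) t k).
  { intros k. assert (Hs : is_derive (fun s => s) t 1) by apply is_derive_Reals, derivable_pt_lim_id.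
    pose proof (is_derive_scal _ t k 1 Hs) as H. rewrite Rmult_1_r in H. exact H. }
  split.
  - eapply is_derive_ext; [|apply (is_derive_minus (K:=R_AbsRing) (V:=R_NormedModule) _ _ t _ _ A (Hid (Re c)))].
    intros s. unfold minus, plus, opp, Re; simpl. ring.
  - eapply is_derive_ext; [|apply (is_derive_minus (K:=R_AbsRing) (V:=R_NormedModule) _ _ t _ _ B (Hid (Im c)))].
    intros s. unfold minus, plus, opp, Im; simpl. ring.
Qed.

Lemma path_taylor_bound (g h dh : R -> C) (B : R) :
  (forall t, 0 <= t <= 1 -> is_path_derive g t (h t)) ->
  (forall t, 0 <= t <= 1 -> is_path_derive h t (dh t)) ->
  (forall t, 0 <= t <= 1 -> Cmod (dh t) <= B) ->
  forall t, 0 <= t <= 1 -> Cmod (h t - h 0) <= 2 * B /\ Cmod (g t - g 0 - RtoC t * h 0) <= 4 * B.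
Proof.
  intros Dg Dh HB.
  assert (HB0 : 0 <= B) by (eapply Rle_trans; [apply Cmod_ge_0 | apply (HB 0)]; lra).
  assert (Bh : forall t, 0 <= t <= 1 -> Cmod (h t - h 0) <= 2 * B).
  { intros t Ht. eapply Rle_trans.
    - apply (path_mean_value h dh 0 t B); [lra | intros; apply Dh; lra | intros; apply HB; lra].
    - nra. }
  intros t Ht. split; auto.
  replace (g t - g 0 - RtoC t * h 0)%C with ((g t - RtoC t * h 0) - (g 0 - RtoC 0 * h 0))%C by ring.
  eapply Rle_trans.
  - apply (path_mean_value (fun s => g s - RtoC s * h 0)%C (fun s => h s - h 0)%C 0 t (2 * B)); [lra| |].
    + intros u Hu. apply is_path_derive_minus_linear, Dg; lra.
    + intros u Hu. apply Bh; lra.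
  - nra.
Qed.

Lemma segment_point_norm (t : R) (z : C) : 0 <= t -> Cmod (RtoC 0 + RtoC t * z)%C = t * Cmod z.
Proof.
  intros Ht. replace (RtoC 0 + RtoC t * z)%C with (RtoC t * z)%C by ring.
  rewrite Cmod_mult, Cmod_R, Rabs_pos_eq; auto.
Qed.

(** Along the segment [[0, z]], [g t = f (t z)] has [g'' = z^2 q g], so with [G] the maximum of
    [|g|] on [[0, 1]] the Taylor remainders are [O(Q |z|^2 G)]; evaluating at the maximum
    bounds [G] itself. *)
Lemma ode_taylor_bounds_by_max (f f1 f2 q : C -> C) (r Q : R) (z : C) :
  0 < r ->
  (forall u, Cmod u < r -> is_Cderive f u (f1 u)) ->
  (forall u, Cmod u < r -> is_Cderive f1 u (f2 u)) ->
  (forall u, Cmod u < r -> f2 u = (q u * f u)%C) ->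
  (forall u, Cmod u < r -> Cmod (q u) <= Q) ->
  Cmod z < r ->
  exists G, 0 <= G /\ G <= Cmod (f 0) + Cmod z * Cmod (f1 0) + 4 * (Q * (Cmod z * Cmod z) * G) /\
    Cmod (f z - f 0 - z * f1 0) <= 4 * (Q * (Cmod z * Cmod z) * G) /\
    Cmod (z * (f1 z - f1 0)) <= 2 * (Q * (Cmod z * Cmod z) * G).
Proof.
  intros Hr H1 H2 Hode Hq Hz.
  set (pt := fun t : R => (RtoC 0 + RtoC t * z)%C).
  assert (Hpt : forall t, 0 <= t <= 1 -> Cmod (pt t) < r).
  { intros t Ht. unfold pt. rewrite segment_point_norm by lra. pose proof (Cmod_ge_0 z). nra. }
  assert (Hp0 : pt 0 = RtoC 0) by (unfold pt; ring).
  assert (Hp1 : pt 1 = z) by (unfold pt; ring).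
  destruct (continuity_ab_maj (fun t => Cmod (f (pt t))) 0 1) as [tm [Hmax Htm]]; [lra| |].
  { intros c Hc. apply path_continuous_Cmod, (Ccontinuous_line f (RtoC 0) z c).
    eapply is_Cderive_continuous, H1, Hpt; auto. }
  set (G := Cmod (f (pt tm))) in Hmax.
  assert (Hdh : forall t, 0 <= t <= 1 -> Cmod (z * (z * f2 (pt t)))%C <= Q * (Cmod z * Cmod z) * G).
  { intros t Ht. rewrite Hode, !Cmod_mult by (apply Hpt; auto).
    pose proof (Hq (pt t) (Hpt t Ht)). pose proof (Hmax t Ht).
    pose proof (Cmod_ge_0 z). pose proof (Cmod_ge_0 (q (pt t))). pose proof (Cmod_ge_0 (f (pt t))).
    assert (Cmod (q (pt t)) * Cmod (f (pt t)) <= Q * G) by (apply Rmult_le_compat; auto).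
    assert (0 <= Cmod z * Cmod z) by nra. nra. }
  pose proof (path_taylor_bound (fun t => f (pt t)) (fun t => z * f1 (pt t))%C
                (fun t => z * (z * f2 (pt t)))%C (Q * (Cmod z * Cmod z) * G)
                (fun t Ht => is_Cderive_line f (RtoC 0) z t _ (H1 _ (Hpt t Ht)))
                (fun t Ht => is_Cderive_line (fun v => z * f1 v)%C (RtoC 0) z t _
                               (is_Cderive_scal z _ _ _ (H2 _ (Hpt t Ht))))
                Hdh) as Hb.
  destruct (Hb tm Htm) as [_ Bg]. destruct (Hb 1 ltac:(lra)) as [Bh1 Bg1].
  simpl in Bg, Bh1, Bg1. rewrite Hp0 in Bg, Bh1, Bg1. rewrite Hp1 in Bh1, Bg1.
  exists G. split; [apply Cmod_ge_0|]. split; [|split].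
  - pose proof (Cmod_le_sub_plus (f (pt tm)) (f 0 + RtoC tm * (z * f1 0))%C) as HG.
    replace (f (pt tm) - (f 0 + RtoC tm * (z * f1 0)))%C with (f (pt tm) - f 0 - RtoC tm * (z * f1 0))%C
      in HG by ring.
    assert (Cmod (f 0 + RtoC tm * (z * f1 0))%C <= Cmod (f 0) + Cmod z * Cmod (f1 0)).
    { eapply Rle_trans; [apply Cmod_triangle|]. rewrite !Cmod_mult, Cmod_R, Rabs_pos_eq by lra.
      assert (0 <= Cmod z * Cmod (f1 0)) by (apply Rmult_le_pos; apply Cmod_ge_0). nra. }
    change (Cmod (f (pt tm))) with G in HG. lra.
  - replace (f z - f 0 - z * f1 0)%C with (f z - f 0 - RtoC 1 * (z * f1 0))%C by ring. exact Bg1.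
  - replace (z * (f1 z - f1 0))%C with (z * f1 z - z * f1 0)%C by ring. exact Bh1.
Qed.

Theorem second_order_ode_estimate (f f1 f2 q : C -> C) (r Q : R) (z : C) :
  0 < r ->
  (forall u, Cmod u < r -> is_Cderive f u (f1 u)) ->
  (forall u, Cmod u < r -> is_Cderive f1 u (f2 u)) ->
  (forall u, Cmod u < r -> f2 u = (q u * f u)%C) ->
  (forall u, Cmod u < r -> Cmod (q u) <= Q) ->
  Cmod z < r -> 8 * Q * (Cmod z * Cmod z) <= 1 ->
  Cmod (f z - f 0 - z * f1 0) <= 8 * Q * (Cmod z * Cmod z) * (Cmod (f 0) + Cmod z * Cmod (f1 0)) /\
  Cmod (z * (f1 z - f1 0)) <= 8 * Q * (Cmod z * Cmod z) * (Cmod (f 0) + Cmod z * Cmod (f1 0)).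
Proof.
  intros Hr H1 H2 Hode Hq Hz Hsm.
  destruct (ode_taylor_bounds_by_max f f1 f2 q r Q z Hr H1 H2 Hode Hq Hz) as (G & HG0 & HG & Bf & Bf1).
  assert (HQ : 0 <= Q) by (eapply Rle_trans; [apply Cmod_ge_0 | apply (Hq 0)]; rewrite Cmod_0; lra).
  set (E := Cmod (f 0) + Cmod z * Cmod (f1 0)) in *.
  assert (HE : 0 <= E) by (unfold E; pose proof (Cmod_ge_0 (f 0)); pose proof (Cmod_ge_0 (f1 0));
                           pose proof (Cmod_ge_0 z); nra).
  assert (HQz : 0 <= Q * (Cmod z * Cmod z)) by (pose proof (Cmod_ge_0 z); nra).
  assert (HGE : G <= 2 * E) by nra.
  assert (Q * (Cmod z * Cmod z) * G <= Q * (Cmod z * Cmod z) * (2 * E)) by (apply Rmult_le_compat_l; auto).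
  assert (0 <= Q * (Cmod z * Cmod z) * E) by (apply Rmult_le_pos; auto).
  split; lra.
Qed.

(** * The limit of [mu] *)

Section PointwiseQuotient.

Variables (a b N Nz z : C) (Cc : R).
Hypothesis Cc_nonneg : 0 <= Cc.
Hypothesis N_nonzero : N <> RtoC 0.
Hypothesis Nz_at_0 : z = RtoC 0 -> Nz = b.
Hypothesis N_estimate : Cmod (N - a - z * b) <= Cc * (Cmod z * Cmod z) * (Cmod a + Cmod z * Cmod b).
Hypothesis Nz_estimate : Cmod (z * (Nz - b)) <= Cc * (Cmod z * Cmod z) * (Cmod a + Cmod z * Cmod b).
Hypothesis z_small : Cmod z <= 1 /\ 2 * Cc * Cmod z <= 1 / 4.

Lemma Nz_estimate_divided : Cmod (Nz - b) <= Cc * Cmod z * (Cmod a + Cmod z * Cmod b).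
Proof.
  destruct (Ceq_dec z (RtoC 0)) as [E0|E0].
  - rewrite (Nz_at_0 E0), E0, Cmod_0. replace (b - b)%C with (RtoC 0) by ring. rewrite Cmod_0. lra.
  - assert (0 < Cmod z) by (apply Cmod_gt_0; auto). pose proof Nz_estimate as Hz. rewrite Cmod_mult in Hz.
    apply Rmult_le_reg_l with (Cmod z); auto. nra.
Qed.

Lemma quotient_near_limit (L : C) (e : R) : 0 <= e <= 1 ->
  Cmod (b - L * a) <= e * Cmod a -> Cmod z * (Cmod L + 1) <= 1 / 4 ->
  Cmod ((- (2 * Nz / N)) - (- (2 * L)))%C
  <= 4 * (Cmod z * (2 * Cc + Cmod L * (Cmod L + 1) + 2 * Cc * Cmod L) + e).
Proof.
  intros He HL Hz. destruct z_small as [Hz1 HzC].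
  pose proof (Cmod_ge_0 z) as Pz. pose proof (Cmod_ge_0 a) as Pa. pose proof (Cmod_ge_0 b) as Pb.
  pose proof (Cmod_ge_0 L) as PL.
  set (K1 := Cmod L + 1) in *. set (E := Cmod a + Cmod z * Cmod b) in *.
  assert (Hb : Cmod b <= K1 * Cmod a).
  { pose proof (Cmod_le_sub_plus b (L * a)%C) as Ht. rewrite Cmod_mult in Ht. unfold K1. nra. }
  assert (HE : E <= 2 * Cmod a).
  { unfold E. assert (Cmod z * Cmod b <= Cmod z * (K1 * Cmod a)) by (apply Rmult_le_compat_l; lra). nra. }
  assert (HCE : Cc * Cmod z * E <= Cc * Cmod z * (2 * Cmod a)) by (apply Rmult_le_compat_l; nra).
  assert (HzE : Cc * (Cmod z * Cmod z) * E <= Cc * Cmod z * (2 * Cmod a)).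
  { replace (Cc * (Cmod z * Cmod z) * E) with (Cc * Cmod z * (Cmod z * E)) by ring.
    apply Rmult_le_compat_l; [nra|]. unfold E in *. nra. }
  assert (HzB : Cmod z * Cmod b <= Cmod z * K1 * Cmod a)
    by (rewrite Rmult_assoc; apply Rmult_le_compat_l; lra).
  assert (HNa : Cmod (N - a) <= (Cmod z * K1 + Cc * Cmod z * 2) * Cmod a).
  { replace (N - a)%C with ((N - a - z * b) + z * b)%C by ring.
    eapply Rle_trans; [apply Cmod_triangle|]. rewrite Cmod_mult. nra. }
  assert (HN_low : Cmod a / 2 <= Cmod N).
  { pose proof (Cmod_le_sub_plus a N) as Ht. rewrite Cmod_sub_sym in Ht. nra. }
  assert (HNp : 0 < Cmod N) by (apply Cmod_gt_0; auto).
  assert (Hap : 0 < Cmod a).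
  { apply Cmod_gt_0. intro Ea. apply N_nonzero, Cmod_eq_0.
    rewrite Ea, Cmod_0, Rmult_0_r in HNa. replace (N - 0)%C with N in HNa by ring.
    pose proof (Cmod_ge_0 N). lra. }
  assert (Hnum : Cmod (Nz - L * N) <= (Cmod z * (2 * Cc + Cmod L * K1 + 2 * Cc * Cmod L) + e) * Cmod a).
  { replace (Nz - L * N)%C with ((Nz - b) + (b - L * a) + - (L * (N - a)))%C by ring.
    eapply Rle_trans; [apply Cmod_triangle3|]. rewrite Cmod_opp, Cmod_mult.
    pose proof Nz_estimate_divided as HNz. fold E in HNz.
    assert (Cmod L * Cmod (N - a) <= Cmod L * ((Cmod z * K1 + Cc * Cmod z * 2) * Cmod a))
      by (apply Rmult_le_compat_l; lra).
    lra. }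
  replace ((- (2 * Nz / N)) - (- (2 * L)))%C with (- (2 * (Nz - L * N)) / N)%C by (field; auto).
  rewrite Cmod_div, Cmod_opp, Cmod_mult, Cmod_2 by auto.
  apply Rle_trans with (2 * ((Cmod z * (2 * Cc + Cmod L * K1 + 2 * Cc * Cmod L) + e) * Cmod a) / (Cmod a / 2)).
  - unfold Rdiv. apply Rmult_le_compat; [apply Rmult_le_pos; [lra|apply Cmod_ge_0] |
      left; apply Rinv_0_lt_compat; auto | apply Rmult_le_compat_l; lra | apply Rinv_le_contravar; lra].
  - right. field. lra.
Qed.

Lemma quotient_large (e : R) : 0 <= e <= 1 / 3 -> Cmod a <= e * Cmod b ->
  1 / (e + Cmod z * (1 + 2 * Cc)) <= Cmod (- (2 * Nz / N))%C.
Proof.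
  intros He Hab. destruct z_small as [Hz1 HzC].
  pose proof (Cmod_ge_0 z) as Pz. pose proof (Cmod_ge_0 a) as Pa. pose proof (Cmod_ge_0 b) as Pb.
  set (E := Cmod a + Cmod z * Cmod b).
  assert (HE : E <= 2 * Cmod b) by (unfold E; nra).
  assert (HzE : Cc * (Cmod z * Cmod z) * E <= 2 * Cc * Cmod z * Cmod b).
  { replace (Cc * (Cmod z * Cmod z) * E) with (Cc * Cmod z * (Cmod z * E)) by ring.
    replace (2 * Cc * Cmod z * Cmod b) with (Cc * Cmod z * (2 * Cmod b)) by ring.
    apply Rmult_le_compat_l; [nra|]. unfold E in *. nra. }
  assert (HNz_low : Cmod b / 2 <= Cmod Nz).
  { pose proof Nz_estimate_divided as HNz. fold E in HNz.
    pose proof (Cmod_le_sub_plus b Nz) as Ht. rewrite Cmod_sub_sym in Ht.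
    assert (Cc * Cmod z * E <= Cc * Cmod z * (2 * Cmod b)) by (apply Rmult_le_compat_l; nra). nra. }
  assert (HN_up : Cmod N <= (e + Cmod z * (1 + 2 * Cc)) * Cmod b).
  { replace N with ((N - a - z * b) + a + z * b)%C by ring.
    eapply Rle_trans; [apply Cmod_triangle3|]. rewrite Cmod_mult.
    pose proof N_estimate as HN. fold E in HN. lra. }
  assert (HNp : 0 < Cmod N) by (apply Cmod_gt_0; auto).
  assert (Hd : 0 < e + Cmod z * (1 + 2 * Cc)).
  { destruct (Rle_lt_or_eq_dec 0 (e + Cmod z * (1 + 2 * Cc))) as [|E0]; [nra|auto|].
    rewrite <- E0, Rmult_0_l in HN_up. lra. }
  rewrite Cmod_opp, Cmod_div, Cmod_mult, Cmod_2 by auto.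
  set (dl := e + Cmod z * (1 + 2 * Cc)) in *.
  apply Rle_trans with (Cmod b / Cmod N).
  - unfold Rdiv. rewrite Rmult_1_l. apply Rmult_le_reg_r with (dl * Cmod N); [nra|].
    replace (/ dl * (dl * Cmod N)) with (Cmod N) by (field; lra).
    replace (Cmod b * / Cmod N * (dl * Cmod N)) with (dl * Cmod b) by (field; lra). lra.
  - unfold Rdiv. apply Rmult_le_compat_r; [left; apply Rinv_0_lt_compat|]; lra.
Qed.

End PointwiseQuotient.

Lemma ball_of_Cmod (x y : C) (e : R) : Cmod (y - x) < e -> ball x e y.
Proof. apply C_NormedModule_mixin_compat1. Qed.

Lemma Cmod_of_ball (x y : C) (e : R) : ball x e y -> Cmod (y - x) < 2 * e.
Proof.
  intros [H1 H2]. change (Rabs (fst y - fst x) < e) in H1. change (Rabs (snd y - snd x) < e) in H2.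
  eapply Rle_lt_trans; [apply Cmod_le_Re_Im|].
  replace (Re (y - x)%C) with (fst y - fst x) by (unfold Re; simpl; ring).
  replace (Im (y - x)%C) with (snd y - snd x) by (unfold Im; simpl; ring). lra.
Qed.

Lemma locally_origin_iff (P : C * C -> Prop) : locally (RtoC 0, RtoC 0) P <->
  exists d, 0 < d /\ forall z w, Cmod z < d -> Cmod w < d -> P (z, w).
Proof.
  split.
  - intros [e He]. exists e. split; [apply cond_pos|]. intros z w Hz Hw.
    apply He. split; apply ball_of_Cmod; simpl; rewrite Cminus_0_r; auto.
  - intros [d [Hd H]]. exists (mkposreal (d / 2) ltac:(lra)). intros [z w] [Hz Hw]. simpl in *.
    apply Cmod_of_ball in Hz. apply Cmod_of_ball in Hw. rewrite Cminus_0_r in Hz, Hw. apply H; lra.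
Qed.

Section QuotientLimit.

Variables (nu nuz : C * C -> C) (Cc rho1 : R).
Hypotheses (Cc_nonneg : 0 <= Cc) (rho1_pos : 0 < rho1).
Hypothesis estimates : forall z w, Cmod z < rho1 -> Cmod w < rho1 ->
  let E := Cmod (nu (RtoC 0, w)) + Cmod z * Cmod (nuz (RtoC 0, w)) in
  Cmod (nu (z, w) - nu (RtoC 0, w) - z * nuz (RtoC 0, w))%C <= Cc * (Cmod z * Cmod z) * E /\
  Cmod (z * (nuz (z, w) - nuz (RtoC 0, w)))%C <= Cc * (Cmod z * Cmod z) * E.

Lemma quotient_converges :
  ratio_converges (fun w => nu (RtoC 0, w)) (fun w => nuz (RtoC 0, w)) ->
  exists L : C, filterlim (fun p => (- (2 * nuz p / nu p))%C)
    (within (fun p => nu p <> RtoC 0) (locally (RtoC 0, RtoC 0))) (locally L).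
Proof.
  intros [L HL]. exists (- (2 * L))%C. intros P [eps HP]. apply locally_origin_iff.
  set (T := 2 * Cc + Cmod L * (Cmod L + 1) + 2 * Cc * Cmod L).
  assert (HT : 0 <= T) by (unfold T; pose proof (Cmod_ge_0 L); nra).
  pose proof (cond_pos eps) as Heps.
  set (e := Rmin 1 (eps / 16)).
  assert (He : 0 < e /\ e <= 1 /\ e <= eps / 16) by (unfold e, Rmin; destruct Rle_dec; lra).
  destruct (HL e ltac:(lra)) as [eta1 [Heta1 Hw1]].
  assert (Hpos : 0 < 1 / (4 * (Cmod L + 1)) /\ 0 < 1 / (8 * Cc + 8) /\ 0 < eps / (16 * (T + 1))).
  { pose proof (Cmod_ge_0 L). repeat split; apply Rdiv_lt_0_compat; lra. }
  set (dz := Rmin (Rmin rho1 eta1) (Rmin (Rmin 1 (1 / (4 * (Cmod L + 1))))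
                                          (Rmin (1 / (8 * Cc + 8)) (eps / (16 * (T + 1)))))).
  assert (Hdz : 0 < dz /\ dz <= rho1 /\ dz <= eta1 /\ dz <= 1 /\ dz <= 1 / (4 * (Cmod L + 1)) /\
                dz <= 1 / (8 * Cc + 8) /\ dz <= eps / (16 * (T + 1)))
    by (unfold dz, Rmin; repeat destruct Rle_dec; lra).
  exists dz. split; [lra|]. intros z w Hz Hw Hnu. apply HP, ball_of_Cmod.
  destruct (estimates z w ltac:(lra) ltac:(lra)) as [E1 E2].
  pose proof (Cmod_ge_0 z). pose proof (Cmod_ge_0 L).
  assert (HzK : Cmod z * (Cmod L + 1) <= 1 / 4).
  { apply Rle_trans with (1 / (4 * (Cmod L + 1)) * (Cmod L + 1)); [apply Rmult_le_compat_r; lra|].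
    right; field; lra. }
  assert (HzC : 2 * Cc * Cmod z <= 1 / 4).
  { apply Rle_trans with (2 * Cc * (1 / (8 * Cc + 8))); [apply Rmult_le_compat_l; lra|].
    apply Rmult_le_reg_r with (8 * Cc + 8); [lra|]. unfold Rdiv.
    rewrite Rmult_assoc, (Rmult_assoc 1), Rinv_l by lra. lra. }
  assert (HzT : Cmod z * T <= eps / 16).
  { apply Rle_trans with (eps / (16 * (T + 1)) * (T + 1)); [apply Rmult_le_compat; lra|].
    right; field; lra. }
  eapply Rle_lt_trans.
  - apply (quotient_near_limit (nu (RtoC 0, w)) (nuz (RtoC 0, w)) (nu (z, w)) (nuz (z, w)) z Cc)
      with (L := L) (e := e);
      first [assumption | lra | intros Ez; rewrite Ez; reflexivity | apply Hw1; lra].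
  - fold T. lra.
Qed.

Lemma quotient_diverges :
  ratio_diverges (fun w => nu (RtoC 0, w)) (fun w => nuz (RtoC 0, w)) ->
  filterlim (fun p => Cmod (- (2 * nuz p / nu p))%C)
    (within (fun p => nu p <> RtoC 0) (locally (RtoC 0, RtoC 0))) (Rbar_locally p_infty).
Proof.
  intros HII P [M HM]. apply locally_origin_iff.
  set (M1 := Rmax M 1).
  assert (HM1 : 1 <= M1 /\ M <= M1) by (unfold M1, Rmax; destruct Rle_dec; lra).
  assert (He1 : 0 < 1 / (3 * M1) <= 1 / 3).
  { split; [apply Rdiv_lt_0_compat; lra|]. apply Rmult_le_reg_r with (3 * M1); [lra|].
    unfold Rdiv. rewrite Rmult_assoc, Rinv_l by lra. nra. }
  destruct (HII (1 / (3 * M1))) as [eta1 [Heta1 Hw1]]; [lra|].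
  assert (Hpos : 0 < 1 / (8 * Cc + 8) /\ 0 < 1 / (3 * M1 * (1 + 2 * Cc)))
    by (split; apply Rdiv_lt_0_compat; nra).
  set (dz := Rmin (Rmin rho1 eta1) (Rmin (Rmin 1 (1 / (8 * Cc + 8))) (1 / (3 * M1 * (1 + 2 * Cc))))).
  assert (Hdz : 0 < dz /\ dz <= rho1 /\ dz <= eta1 /\ dz <= 1 /\ dz <= 1 / (8 * Cc + 8) /\
                dz <= 1 / (3 * M1 * (1 + 2 * Cc)))
    by (unfold dz, Rmin; repeat destruct Rle_dec; lra).
  exists dz. split; [lra|]. intros z w Hz Hw Hnu. apply HM.
  destruct (estimates z w ltac:(lra) ltac:(lra)) as [E1 E2].
  pose proof (Cmod_ge_0 z).
  assert (HzC : 2 * Cc * Cmod z <= 1 / 4).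
  { apply Rle_trans with (2 * Cc * (1 / (8 * Cc + 8))); [apply Rmult_le_compat_l; lra|].
    apply Rmult_le_reg_r with (8 * Cc + 8); [lra|]. unfold Rdiv.
    rewrite Rmult_assoc, (Rmult_assoc 1), Rinv_l by lra. lra. }
  assert (Hsm : Cmod z * (1 + 2 * Cc) < 1 / (3 * M1)).
  { apply Rlt_le_trans with (1 / (3 * M1 * (1 + 2 * Cc)) * (1 + 2 * Cc)); [apply Rmult_lt_compat_r; lra|].
    right; field; lra. }
  eapply Rlt_le_trans;
    [|apply (quotient_large (nu (RtoC 0, w)) (nuz (RtoC 0, w)) (nu (z, w)) (nuz (z, w)) z Cc)
        with (e := 1 / (3 * M1));
      first [assumption | lra | intros Ez; rewrite Ez; reflexivity | apply Hw1; lra]].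
  set (dl := 1 / (3 * M1) + Cmod z * (1 + 2 * Cc)).
  assert (Hdl : 0 < dl < 2 * (1 / (3 * M1))) by (unfold dl; nra).
  apply Rlt_le_trans with (3 * M1 / 2); [lra|].
  apply Rmult_le_reg_r with dl; [lra|]. replace (1 / dl * dl) with 1 by (field; lra).
  assert (Hlt : 3 * M1 / 2 * dl < 3 * M1 / 2 * (2 * (1 / (3 * M1)))) by (apply Rmult_lt_compat_l; lra).
  replace (3 * M1 / 2 * (2 * (1 / (3 * M1)))) with 1 in Hlt by (field; lra). lra.
Qed.

End QuotientLimit.

Lemma is_Cderive_of_is_derive (g : C -> C) x l :
  is_derive (K := C_AbsRing) (V := C_NormedModule) g x l -> is_Cderive g x l.
Proof.
  intros [_ H]. specialize (H x (fun P HP => HP)).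
  intros eps He. destruct (H (mkposreal eps He)) as [d Hy]. exists d; split; [apply cond_pos|].
  intros y Hy'. specialize (Hy y Hy'). simpl in Hy.
  change (Cmod (g y - g x - (y - x) * l)%C <= eps * Cmod (y - x)%C) in Hy.
  replace (g y - g x - l * (y - x))%C with (g y - g x - (y - x) * l)%C by ring. auto.
Qed.

Lemma open_contains_disc (D : C -> Prop) : open D -> D (RtoC 0) ->
  exists r, 0 < r /\ forall z, Cmod z < r -> D z.
Proof.
  intros Ho H0. destruct (Ho _ H0) as [e He]. exists e. split; [apply cond_pos|].
  intros z Hz. apply He, ball_of_Cmod. rewrite Cminus_0_r. auto.
Qed.

Lemma holomorphic2_second_variable (D : C -> Prop) (f : C * C -> C) z0 w0 :
  holomorphic2 D D f -> D z0 -> D w0 -> ex_Cderive (fun w => f (z0, w)) w0.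
Proof.
  intros Hh Hz Hw. specialize (Hh (z0, w0) Hz Hw).
  assert (H : ex_filterdiff (K := C_AbsRing) (U := AbsRing_NormedModule C_AbsRing) (V := C_NormedModule)
                (fun w : C => f (z0, w)) (@locally (AbsRing_UniformSpace C_AbsRing) w0)).
  { apply (ex_filterdiff_comp'_2 (K := C_AbsRing) (T := AbsRing_NormedModule C_AbsRing)
             (U := C_NormedModule) (V := C_NormedModule) (fun _ => z0) (fun w => w) (fun a b => f (a, b)) w0).
    - apply ex_filterdiff_const; try apply locally_filter.
    - apply ex_filterdiff_linear. apply Build_is_linear; [intros; reflexivity | intros; reflexivity|].
      exists 1; split; [lra|]. intros x. simpl. change (Cmod x <= 1 * Cmod x). lra.
    - eapply ex_filterdiff_ext; [|exact Hh]. intros [a b]; reflexivity. }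
  apply (proj2 (ex_derive_filterdiff _ _)) in H. destruct H as [l Hl].
  exists l. apply is_Cderive_of_is_derive; auto.
Qed.

Lemma holomorphic2_bounded_near_origin (D : C -> Prop) (f : C * C -> C) :
  holomorphic2 D D f -> D (RtoC 0) ->
  exists d S, 0 < d /\ 0 <= S /\ forall z w, Cmod z < d -> Cmod w < d -> Cmod (f (z, w)) <= S.
Proof.
  intros Hh H0. specialize (Hh (RtoC 0, RtoC 0) H0 H0).
  pose proof (filterdiff_continuous (K:=C_AbsRing)
    (U:=prod_NormedModule C_AbsRing C_NormedModule C_NormedModule) (V:=C_NormedModule) f _ Hh) as Hc.
  pose proof (proj1 (filterlim_locally _ _) Hc (mkposreal 1 Rlt_0_1)) as H.
  destruct (proj1 (locally_origin_iff _) H) as [d [Hd Hy]].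
  exists d, (Cmod (f (RtoC 0, RtoC 0)) + 2). pose proof (Cmod_ge_0 (f (RtoC 0, RtoC 0))).
  split; [auto | split; [lra|]]. intros z w Hz Hw.
  specialize (Hy z w Hz Hw). apply Cmod_of_ball in Hy. simpl in Hy.
  pose proof (Cmod_le_sub_plus (f (z, w)) (f (RtoC 0, RtoC 0))). lra.
Qed.

Lemma first_order_expansion_in_z (D : C -> Prop) (nu s nuz nuzz : C * C -> C) :
  open D -> D (RtoC 0) -> holomorphic2 D D s ->
  (forall p : C * C, D (fst p) -> D (snd p) -> is_partial_z nu p (nuz p)) ->
  (forall p : C * C, D (fst p) -> D (snd p) -> is_partial_z nuz p (nuzz p)) ->
  (forall p : C * C, D (fst p) -> D (snd p) -> (nuzz p + s p / 2 * nu p)%C = RtoC 0) ->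
  exists Cc rho1, 0 <= Cc /\ 0 < rho1 /\ (forall z, Cmod z < rho1 -> D z) /\
    forall z w, Cmod z < rho1 -> Cmod w < rho1 ->
      let E := Cmod (nu (RtoC 0, w)) + Cmod z * Cmod (nuz (RtoC 0, w)) in
      Cmod (nu (z, w) - nu (RtoC 0, w) - z * nuz (RtoC 0, w))%C <= Cc * (Cmod z * Cmod z) * E /\
      Cmod (z * (nuz (z, w) - nuz (RtoC 0, w)))%C <= Cc * (Cmod z * Cmod z) * E.
Proof.
  intros Hopen HD0 Hs Hpz Hpzz Hode.
  destruct (open_contains_disc D Hopen HD0) as [r0 [Hr0 HDr]].
  destruct (holomorphic2_bounded_near_origin D s Hs HD0) as [d1 [S [Hd1 [HS HSb]]]].
  set (r := Rmin r0 d1). assert (Hr : 0 < r /\ r <= r0 /\ r <= d1) by (unfold r, Rmin; destruct Rle_dec; lra).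
  set (rho1 := Rmin r (Rmin 1 (1 / (4 * S + 4)))).
  assert (Hpos : 0 < 1 / (4 * S + 4)) by (apply Rdiv_lt_0_compat; lra).
  assert (Hrho1 : 0 < rho1 /\ rho1 <= r /\ rho1 <= 1 /\ rho1 <= 1 / (4 * S + 4))
    by (unfold rho1, Rmin; repeat destruct Rle_dec; lra).
  assert (HD : forall u, Cmod u < r -> D u) by (intros; apply HDr; lra).
  exists (4 * S), rho1. split; [lra | split; [lra | split; [intros; apply HD; lra|]]].
  intros z w Hz Hw.
  (* Apply the estimate to [u |-> nu (u, w)] with [q = - s / 2], so [|q| <= S / 2]. *)
  replace (4 * S) with (8 * (S / 2)) by field.
  apply (second_order_ode_estimate (fun u => nu (u, w)) (fun u => nuz (u, w)) (fun u => nuzz (u, w))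
           (fun u => - (s (u, w) / 2))%C r); try lra.
  - intros u Hu. apply is_Cderive_of_is_derive, (Hpz (u, w)); simpl; apply HD; lra.
  - intros u Hu. apply is_Cderive_of_is_derive, (Hpzz (u, w)); simpl; apply HD; lra.
  - intros u Hu. apply Cminus_eq_0. rewrite <- (Hode (u, w)) by (simpl; apply HD; lra). ring.
  - intros u Hu. rewrite Cmod_opp, Cmod_div, Cmod_2 by (intro E; injection E; lra).
    pose proof (HSb u w ltac:(lra) ltac:(lra)). lra.
  - pose proof (Cmod_ge_0 z).
    assert (Cmod z * Cmod z <= Cmod z) by nra.
    assert (4 * S * Cmod z <= 1).
    { apply Rle_trans with (4 * S * (1 / (4 * S + 4))); [apply Rmult_le_compat_l; lra|].
      apply Rmult_le_reg_r with (4 * S + 4); [lra|]. unfold Rdiv.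
      rewrite Rmult_assoc, (Rmult_assoc 1), Rinv_l by lra. lra. }
    nra.
Qed.

Theorem lemma2p12 (D : C -> Prop) (nu s nuz nuzz : C * C -> C) :
  open D -> contractible D -> D (RtoC 0) ->
  holomorphic2 D D nu -> holomorphic2 D D s ->
  (forall p : C * C, D (fst p) -> D (snd p) -> is_partial_z nu p (nuz p)) ->
  (forall p : C * C, D (fst p) -> D (snd p) -> is_partial_z nuz p (nuzz p)) ->
  (forall p : C * C, D (fst p) -> D (snd p) ->
     (nuzz p + s p / 2 * nu p)%C = RtoC 0) ->
  nu (RtoC 0, RtoC 0) = RtoC 0 ->
  (exists p : C * C, D (fst p) /\ D (snd p) /\ nu p <> RtoC 0) ->
  let mu := fun p : C * C => (- (2 * nuz p / nu p))%C in
  let F := within (fun p : C * C => nu p <> RtoC 0) (locally (RtoC 0, RtoC 0)) in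
  (exists L : C, filterlim mu F (locally L)) \/
  filterlim (fun p => Cmod (mu p)) F (Rbar_locally p_infty).
Proof.
  intros Hopen _ HD0 Hnu Hs Hpz Hpzz Hode _ _ mu F.
  destruct (first_order_expansion_in_z D nu s nuz nuzz Hopen HD0 Hs Hpz Hpzz Hode)
    as [Cc [rho1 [HCc [Hrho1 [HD Hest]]]]].
  assert (Hholo : forall z w, Cmod z < rho1 -> Cmod w < rho1 -> ex_Cderive (fun v => nu (z, v)) w)
    by (intros; apply (holomorphic2_second_variable D); auto).
  destruct (ratio_dichotomy_of_approx (fun w => nu (RtoC 0, w)) (fun w => nuz (RtoC 0, w))
              (fun h w => nu (RtoC h, w) - nu (RtoC 0, w))%C Cc rho1 rho1) as [HI|HII]; auto.
  - intros h Hh w Hw. destruct (Hest (RtoC h) w) as [E1 _]; [rewrite Cmod_R, Rabs_pos_eq; lra | auto |].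
    rewrite Cmod_R, Rabs_pos_eq in E1 by lra. exact E1.
  - intros h Hh. apply (holomorphic_ratio_dichotomy _ _ rho1 Hrho1); intros z Hz.
    + apply Hholo; auto. rewrite Cmod_0; lra.
    + apply ex_Cderive_minus; apply Hholo; auto; [rewrite Cmod_R, Rabs_pos_eq|rewrite Cmod_0]; lra.
  - left. exact (quotient_converges nu nuz Cc rho1 HCc Hrho1 Hest HI).
  - right. exact (quotient_diverges nu nuz Cc rho1 HCc Hrho1 Hest HII).
Qed.
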